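(* Let $X$ be a complex Banach space and let $\mathcal{D}=\{X_n:n\ge1\}$ be a Schauder decomposition of $X$ which is not $R$-Schauder. Then: (a) there exists a sectorial operator $A$ on $X$ which is a $\mathcal{D}$-multiplier such that the set $\{e^{-tA^{-1}}:t\ge0\}$ is not $R$-bounded; (b) there exists a Ritt operator $T\in B(X)$ which is a $\mathcal{D}$-multiplier such that the set $\{T^n:n\ge0\}$ is not $R$-bounded.
   Context: $R$-boundedness: with $(\varepsilon_j)$ independent Rademacher variables on $(\Omega,\mathbb{P})$ and $\|\sum_{j=1}^k\varepsilon_j\otimes x_j\|_{R,X}=\int_\Omega\|\sum_j\varepsilon_j(u)x_j\|\,d\mathbb{P}(u)$, a set $F\subset B(X)$ is $R$-bounded if there is $K$ with $\|\sum_j\varepsilon_j\otimes T_j x_j\|_{R,X}\le K\|\sum_j\varepsilon_j\otimes x_j\|_{R,X}$ for all finite families $T_j\in F$, $x_j\in X$. A Schauder decomposition of $X$ is a sequence $\mathcal{D}=\{X_n:n\ge1\}$ of closed subspaces such that every $x\in X$ has a unique expansion $x=\sum_{n\ge1}x_n$ with $x_n\in X_n$; $p_n(x)=x_n$ and $P_N=\sum_{n=1}^Np_n$. $\mathcal{D}$ is $R$-Schauder if $\{P_N:N\ge1\}$ is $R$-bounded. A sectorial $\mathcal{D}$-multiplier is an operator $A$ of the form: for a nondecreasing sequence $(a_n)_{n\ge1}$ in $(0,\infty)$, $D(A)=\{x:\sum_na_np_n(x)\text{ converges}\}$, $Ax=\sum_na_np_n(x)$; such $A$ is sectorial of type $0$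 and invertible, with $A^{-1}\in B(X)$ given by $A^{-1}x=\sum_n a_n^{-1}p_n(x)$, and $(e^{-tA^{-1}})_{t\ge0}$ is the semigroup generated by $-A^{-1}$. A Ritt $\mathcal{D}$-multiplier is an operator $T(x)=\sum_{n\ge1}c_np_n(x)$ with $(c_n)$ a nondecreasing sequence in $(0,1)$; such $T$ is a Ritt operator, i.e. $\{T^n:n\ge0\}$ and $\{nT^n(I_X-T):n\ge1\}$ are bounded. *)

From Stdlib Require Import Reals Factorial List.
Open Scope R_scope.

Record Cplx := mkC { Cre : R; Cim : R }.
Definition Cadd (a b : Cplx) : Cplx := mkC (Cre a + Cre b) (Cim a + Cim b).
Definition Cmul (a b : Cplx) : Cplx :=
  mkC (Cre a * Cre b - Cim a * Cim b) (Cre a * Cim b + Cim a * Cre b).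
Definition Cone : Cplx := mkC 1 0.
Definition RtoC (r : R) : Cplx := mkC r 0.
Definition Cmod (a : Cplx) : R := sqrt (Cre a * Cre a + Cim a * Cim a).

Record CBanach := {
  car :> Type;
  vadd : car -> car -> car;
  vzero : car;
  vopp : car -> car;
  vscal : Cplx -> car -> car;
  vnorm : car -> R;
  vadd_assoc : forall x y z, vadd x (vadd y z) = vadd (vadd x y) z;
  vadd_comm : forall x y, vadd x y = vadd y x;
  vadd_0 : forall x, vadd vzero x = x;
  vadd_opp : forall x, vadd x (vopp x) = vzero;
  vscal_mul : forall a b x, vscal (Cmul a b) x = vscal a (vscal b x);
  vscal_1 : forall x, vscal Cone x = x;
  vscal_addv : forall a x y, vscal a (vadd x y) = vadd (vscal a x) (vscal a y);
  vscal_adds : forall a b x, vscal (Cadd a b) x = vadd (vscal a x) (vscal b x);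
  vnorm_nonneg : forall x, 0 <= vnorm x;
  vnorm_eq0 : forall x, vnorm x = 0 -> x = vzero;
  vnorm_scal : forall a x, vnorm (vscal a x) = Cmod a * vnorm x;
  vnorm_triangle : forall x y, vnorm (vadd x y) <= vnorm x + vnorm y;
  vcomplete : forall u : nat -> car,
    (forall eps, eps > 0 -> exists N, forall m n, (N <= m)%nat -> (N <= n)%nat ->
       vnorm (vadd (u m) (vopp (u n))) < eps) ->
    exists l, forall eps, eps > 0 -> exists N, forall n, (N <= n)%nat ->
       vnorm (vadd (u n) (vopp l)) < eps
}.

Arguments vadd {c}. Arguments vzero {c}. Arguments vopp {c}.
Arguments vscal {c}. Arguments vnorm {c}.

Section Banach.
Variable X : CBanach.

Definition seq_cv (u : nat -> X) (l : X) : Prop :=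
  forall eps, eps > 0 -> exists N, forall n, (N <= n)%nat ->
    vnorm (vadd (u n) (vopp l)) < eps.

Fixpoint psum (u : nat -> X) (n : nat) : X :=
  match n with
  | O => u O
  | S m => vadd (psum u m) (u (S m))
  end.

Definition series_cv (u : nat -> X) (l : X) : Prop := seq_cv (psum u) l.

Definition bounded_op (T : X -> X) : Prop :=
  (forall x y, T (vadd x y) = vadd (T x) (T y)) /\
  (forall a x, T (vscal a x) = vscal a (T x)) /\
  (exists M, forall x, vnorm (T x) <= M * vnorm x).

Definition opow (T : X -> X) (n : nat) (x : X) : X := Nat.iter n T x.

(** Rademacher average: rad_aux acc [x1;..;xk] is the mean over all
    sign choices (e1,..,ek) in {-1,1}^k of || acc + sum_j ej xj ||, i.e.
    the integral over Omega w.r.t. independent Rademacher variables. *)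
Fixpoint rad_aux (acc : X) (xs : list X) : R :=
  match xs with
  | nil => vnorm acc
  | cons x xs' => (rad_aux (vadd acc x) xs' + rad_aux (vadd acc (vopp x)) xs') / 2
  end.

Definition Rnorm (xs : list X) : R := rad_aux vzero xs.

Definition R_bounded (F : (X -> X) -> Prop) : Prop :=
  exists K, forall ps : list ((X -> X) * X),
    List.Forall (fun p => F (fst p)) ps ->
    Rnorm (List.map (fun p => fst p (snd p)) ps) <= K * Rnorm (List.map snd ps).

(** Schauder decompositions; D n stands for X_{n+1} (indexing from 0). *)
Definition subspace (V : X -> Prop) : Prop :=
  V vzero /\ (forall x y, V x -> V y -> V (vadd x y)) /\
  (forall a x, V x -> V (vscal a x)).

Definition closed_set (V : X -> Prop) : Prop :=
  forall u l, (forall n, V (u n)) -> seq_cv u l -> V l.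

Definition expansion (D : nat -> X -> Prop) (x : X) (xs : nat -> X) : Prop :=
  (forall n, D n (xs n)) /\ series_cv xs x.

Definition schauder_decomposition (D : nat -> X -> Prop) : Prop :=
  (forall n, subspace (D n) /\ closed_set (D n)) /\
  (forall x, exists xs, expansion D x xs) /\
  (forall x xs ys, expansion D x xs -> expansion D x ys -> forall n, xs n = ys n).

(** The partial-sum projections P_N, N >= 1: P_N x = x_1 + ... + x_N *)
Definition partial_projections (D : nat -> X -> Prop) : (X -> X) -> Prop :=
  fun P => exists N : nat, forall x xs, expansion D x xs -> P x = psum xs N.

Definition R_schauder (D : nat -> X -> Prop) : Prop :=
  R_bounded (partial_projections D).

Definition multiplier (D : nat -> X -> Prop) (c : nat -> R) (T : X -> X) : Prop :=
  forall x xs, expansion D x xs ->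
    series_cv (fun n => vscal (RtoC (c n)) (xs n)) (T x).

Definition is_exp_neg (t : R) (B : X -> X) (S : X -> X) : Prop :=
  forall x, series_cv (fun k => vscal (RtoC ((- t) ^ k / INR (fact k))) (opow B k x)) (S x).

Definition ritt (T : X -> X) : Prop :=
  (exists M, forall n x, vnorm (opow T n x) <= M * vnorm x) /\
  (exists M, forall n x, (1 <= n)%nat ->
     vnorm (vscal (RtoC (INR n)) (opow T n (vadd x (vopp (T x))))) <= M * vnorm x).

End Banach.

Arguments seq_cv {X}. Arguments psum {X}. Arguments series_cv {X}.
Arguments bounded_op {X}. Arguments opow {X}. Arguments Rnorm {X}.
Arguments R_bounded {X}. Arguments expansion {X}.
Arguments schauder_decomposition {X}. Arguments partial_projections {X}.
Arguments R_schauder {X}. Arguments multiplier {X}. Arguments is_exp_neg {X}.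
Arguments ritt {X}.

(** If the partial-sum projections [P_N] are not R-bounded, then above any index [a] there are
    finitely many vectors supported in a block [a < n <= b] whose partial projections have
    Rademacher average more than [a] times that of the vectors.  Choose weights [K_n], growing
    inside each such block by a factor so large that, for the time [m = L K_N], the symbol
    [exp (- m / K_n)] is within a tiny tolerance of the indicator of [n > N] on the block.  That
    symbol is the one of [e^(-m A^-1)] for [A^-1] the multiplier by [1 / K_n], and of [T^m] for
    [T] the multiplier by [exp (- 1 / K_n)], so R-boundedness of either family would make
    [P_N = I - (I - P_N)] R-bounded on the block, contradicting the ratio [a].  Multipliers with
    symbols of bounded variation are bounded by Abel summation, once the [P_N] are known to be
    uniformly bounded (a Baire category argument); [T] is Ritt because the weights at least
    double, which bounds the variation of [n c^n (1 - c)] uniformly in [n]. *)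

From Pilot Require Import Defs.
From Stdlib Require Import Reals Lra Lia Arith List.
From Stdlib Require Import ClassicalEpsilon.
Open Scope R_scope.

Lemma Cmul_RtoC r s : Cmul (RtoC r) (RtoC s) = RtoC (r * s).
Proof. unfold Cmul, RtoC; simpl; f_equal; ring. Qed.

Lemma Cadd_RtoC r s : Cadd (RtoC r) (RtoC s) = RtoC (r + s).
Proof. unfold Cadd, RtoC; simpl; f_equal; ring. Qed.

Lemma Cmod_RtoC r : Cmod (RtoC r) = Rabs r.
Proof.
  unfold Cmod, RtoC; simpl.
  replace (r * r + 0 * 0) with (Rsqr r) by (unfold Rsqr; ring).
  apply sqrt_Rsqr_abs.
Qed.

Lemma Cmul_comm a b : Cmul a b = Cmul b a.
Proof. unfold Cmul; f_equal; ring. Qed.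

Lemma choice_fun {A B : Type} (P : A -> B -> Prop) :
  (forall a, exists b, P a b) -> exists f : A -> B, forall a, P a (f a).
Proof.
  intro H. exists (fun a => proj1_sig (constructive_indefinite_description _ (H a))).
  intro a. destruct constructive_indefinite_description; auto.
Qed.

Section VectorAlgebra.
Context {X : CBanach}.
Implicit Types x y z : X.

Definition vsub x y : X := vadd x (vopp y).
Definition rscal (r : R) x : X := vscal (RtoC r) x.

Lemma vadd_0r x : vadd x vzero = x.
Proof. rewrite vadd_comm; apply vadd_0. Qed.

Lemma vadd_cancel x y z : vadd x y = vadd x z -> y = z.
Proof.
  intro H. rewrite <- (vadd_0 _ y), <- (vadd_0 _ z), <- (vadd_opp _ x).
  rewrite (vadd_comm _ x (vopp x)), <- !vadd_assoc, H; auto.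
Qed.

Lemma rscal_addl r s x : rscal (r + s) x = vadd (rscal r x) (rscal s x).
Proof. unfold rscal; rewrite <- Cadd_RtoC; apply vscal_adds. Qed.

Lemma rscal_addr r x y : rscal r (vadd x y) = vadd (rscal r x) (rscal r y).
Proof. apply vscal_addv. Qed.

Lemma rscal_mul r s x : rscal r (rscal s x) = rscal (r * s) x.
Proof. unfold rscal; rewrite <- Cmul_RtoC, vscal_mul; auto. Qed.

Lemma rscal_1 x : rscal 1 x = x.
Proof. apply vscal_1. Qed.

Lemma rscal_0l x : rscal 0 x = vzero.
Proof.
  apply (vadd_cancel (rscal 0 x)). rewrite vadd_0r, <- rscal_addl, Rplus_0_r; auto.
Qed.

Lemma vscal_rscal a r x : vscal a (rscal r x) = rscal r (vscal a x).
Proof. unfold rscal; rewrite <- !vscal_mul, Cmul_comm; auto. Qed.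

Lemma vopp_eq_rscal x : vopp x = rscal (-1) x.
Proof.
  apply (vadd_cancel x). rewrite vadd_opp.
  rewrite <- (rscal_1 x) at 1. rewrite <- rscal_addl, Rplus_opp_r, rscal_0l; auto.
Qed.

Lemma rscal_0r r : rscal r vzero = vzero.
Proof. apply (vadd_cancel (rscal r vzero)). rewrite <- rscal_addr, !vadd_0r; auto. Qed.

Lemma vnorm_rscal r x : vnorm (rscal r x) = Rabs r * vnorm x.
Proof. unfold rscal; rewrite vnorm_scal, Cmod_RtoC; auto. Qed.

Lemma vnorm_zero : vnorm (vzero : X) = 0.
Proof. rewrite <- (rscal_0l vzero), vnorm_rscal, Rabs_R0; ring. Qed.

Lemma vnorm_opp x : vnorm (vopp x) = vnorm x.
Proof.
  rewrite vopp_eq_rscal, vnorm_rscal. replace (Rabs (-1)) with 1 by (rewrite Rabs_left; lra). ring.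
Qed.

Lemma vopp_add x y : vopp (vadd x y) = vadd (vopp x) (vopp y).
Proof. rewrite !vopp_eq_rscal; apply rscal_addr. Qed.

Lemma vopp_opp x : vopp (vopp x) = x.
Proof. rewrite !vopp_eq_rscal, rscal_mul. replace (-1 * -1) with 1 by ring. apply rscal_1. Qed.

Lemma vopp_zero : vopp (vzero : X) = vzero.
Proof. rewrite vopp_eq_rscal; apply rscal_0r. Qed.

Lemma vadd_opp_l x : vadd (vopp x) x = vzero.
Proof. rewrite vadd_comm; apply vadd_opp. Qed.

Lemma vopp_rscal r x : vopp (rscal r x) = rscal (- r) x.
Proof. rewrite vopp_eq_rscal, rscal_mul; f_equal; ring. Qed.

Lemma vscal_opp a x : vscal a (vopp x) = vopp (vscal a x).
Proof. rewrite !vopp_eq_rscal. apply vscal_rscal. Qed.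

Lemma vadd_swap (a b c d : X) : vadd (vadd a b) (vadd c d) = vadd (vadd a c) (vadd b d).
Proof. rewrite !vadd_assoc. f_equal. rewrite <- !vadd_assoc. f_equal. apply vadd_comm. Qed.

Lemma vadd_rcomm (a b c : X) : vadd (vadd a b) c = vadd (vadd a c) b.
Proof. rewrite <- !vadd_assoc, (vadd_comm _ b c); auto. Qed.

Lemma vadd_double x : vadd x x = rscal 2 x.
Proof. replace 2 with (1 + 1) by ring. rewrite rscal_addl, rscal_1; auto. Qed.

Lemma vsub_add (a b c d : X) : vsub (vadd a b) (vadd c d) = vadd (vsub a c) (vsub b d).
Proof. unfold vsub. rewrite vopp_add. apply vadd_swap. Qed.

Lemma vsub_diag x : vsub x x = vzero.
Proof. apply vadd_opp. Qed.

Lemma vsub_0r x : vsub x vzero = x.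
Proof. unfold vsub; rewrite vopp_zero; apply vadd_0r. Qed.

Lemma vopp_vsub x y : vopp (vsub x y) = vsub y x.
Proof. unfold vsub; rewrite vopp_add, vopp_opp; apply vadd_comm. Qed.

Lemma vsub_trans x y z : vsub x z = vadd (vsub x y) (vsub y z).
Proof.
  unfold vsub. rewrite <- (vadd_assoc _ x (vopp y)), (vadd_assoc _ (vopp y) y).
  rewrite vadd_opp_l, vadd_0; auto.
Qed.

Lemma vadd_vsub x y : vadd (vsub x y) y = x.
Proof. unfold vsub. rewrite <- vadd_assoc, vadd_opp_l, vadd_0r; auto. Qed.

Lemma vsub_add_l x y : vsub (vadd x y) x = y.
Proof. unfold vsub. rewrite (vadd_comm _ x y), <- vadd_assoc, vadd_opp, vadd_0r; auto. Qed.

Lemma vsub_sub_r (a b c : X) : vsub a (vsub b c) = vadd (vsub a b) c.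
Proof. unfold vsub. rewrite vopp_add, vopp_opp, vadd_assoc; auto. Qed.

Lemma vsub_rcomm (a b c : X) : vsub (vsub a b) c = vsub (vsub a c) b.
Proof. unfold vsub. rewrite <- !vadd_assoc. f_equal. apply vadd_comm. Qed.

Lemma vsub_add_r (a b c : X) : vsub (vadd a b) c = vadd (vsub a c) b.
Proof. unfold vsub. rewrite <- !vadd_assoc. f_equal. apply vadd_comm. Qed.

Lemma rscal_subr r x y : rscal r (vsub x y) = vsub (rscal r x) (rscal r y).
Proof.
  unfold vsub. rewrite rscal_addr, vopp_eq_rscal, rscal_mul, vopp_eq_rscal, rscal_mul, Rmult_comm; auto.
Qed.

Lemma rscal_subl r s x : rscal (r - s) x = vsub (rscal r x) (rscal s x).
Proof. unfold vsub, Rminus. rewrite rscal_addl, vopp_rscal. auto. Qed.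

Lemma vsub_eq0 x y : vsub x y = vzero -> x = y.
Proof. intro H. rewrite <- (vadd_vsub x y), H, vadd_0; auto. Qed.

Lemma vnorm_sub_sym x y : vnorm (vsub x y) = vnorm (vsub y x).
Proof. rewrite <- vopp_vsub, vnorm_opp; auto. Qed.

Lemma vnorm_dist x y z : vnorm (vsub x z) <= vnorm (vsub x y) + vnorm (vsub y z).
Proof. rewrite (vsub_trans x y z); apply vnorm_triangle. Qed.

Lemma vnorm_sub_le x y : vnorm (vsub x y) <= vnorm x + vnorm y.
Proof. unfold vsub; rewrite <- (vnorm_opp y); apply vnorm_triangle. Qed.

Lemma vnorm_rev x y : vnorm x - vnorm y <= vnorm (vsub x y).
Proof. pose proof (vnorm_triangle _ (vsub x y) y) as H. rewrite vadd_vsub in H. lra. Qed.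

End VectorAlgebra.

Section Limits.
Context {X : CBanach}.
Implicit Types (u v : nat -> X) (x y l : X).

Lemma seq_cv_unique u l1 l2 : seq_cv u l1 -> seq_cv u l2 -> l1 = l2.
Proof.
  intros H1 H2. apply vsub_eq0, vnorm_eq0.
  apply Rle_antisym; [|apply vnorm_nonneg].
  apply Rnot_lt_le; intro Hp.
  assert (He : vnorm (vsub l1 l2) / 2 > 0) by lra.
  destruct (H1 _ He) as [N1 HN1]. destruct (H2 _ He) as [N2 HN2].
  specialize (HN1 (max N1 N2) ltac:(lia)). specialize (HN2 (max N1 N2) ltac:(lia)).
  fold (vsub (u (max N1 N2)) l1) in HN1. fold (vsub (u (max N1 N2)) l2) in HN2.
  pose proof (vnorm_dist l1 (u (max N1 N2)) l2) as H.
  rewrite (vnorm_sub_sym l1 (u _)) in H. lra.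
Qed.

Lemma seq_cv_ext_eventually u v l M :
  (forall n, (M <= n)%nat -> u n = v n) -> seq_cv u l -> seq_cv v l.
Proof.
  intros E H eps He. destruct (H eps He) as [N HN]. exists (max N M); intros n Hn.
  rewrite <- E by lia; apply HN; lia.
Qed.

Lemma seq_cv_ext u v l : (forall n, u n = v n) -> seq_cv u l -> seq_cv v l.
Proof. intro E. apply (seq_cv_ext_eventually _ _ _ O). auto. Qed.

Lemma seq_cv_const l : seq_cv (fun _ => l) l.
Proof. intros eps He; exists O; intros. fold (vsub l l). rewrite vsub_diag, vnorm_zero; lra. Qed.

Lemma seq_cv_add u v x y :
  seq_cv u x -> seq_cv v y -> seq_cv (fun n => vadd (u n) (v n)) (vadd x y).
Proof.
  intros Hu Hv eps He.
  destruct (Hu (eps/2) ltac:(lra)) as [N1 H1]. destruct (Hv (eps/2) ltac:(lra)) as [N2 H2].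
  exists (max N1 N2); intros n Hn. fold (vsub (vadd (u n) (v n)) (vadd x y)). rewrite vsub_add.
  eapply Rle_lt_trans; [apply vnorm_triangle|].
  specialize (H1 n ltac:(lia)); specialize (H2 n ltac:(lia)). unfold vsub. lra.
Qed.

Lemma seq_cv_bounded_map (T : X -> X) K u l :
  (forall x y, T (vsub x y) = vsub (T x) (T y)) -> (forall x, vnorm (T x) <= K * vnorm x) ->
  seq_cv u l -> seq_cv (fun n => T (u n)) (T l).
Proof.
  intros Hl HK Hu eps He.
  destruct (Hu (eps / (Rabs K + 1))) as [N HN].
  { apply Rdiv_lt_0_compat; [lra|]. pose proof (Rabs_pos K); lra. }
  exists N. intros n Hn. fold (vsub (T (u n)) (T l)). rewrite <- Hl.
  specialize (HN n Hn). fold (vsub (u n) l) in HN. eapply Rle_lt_trans; [apply HK|].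
  pose proof (vnorm_nonneg _ (vsub (u n) l)). pose proof (Rabs_pos K). pose proof (RRle_abs K).
  apply Rle_lt_trans with ((Rabs K + 1) * vnorm (vsub (u n) l)); [nra|].
  apply Rmult_lt_compat_l with (r := Rabs K + 1) in HN; [|lra].
  replace ((Rabs K + 1) * (eps / (Rabs K + 1))) with eps in HN by (field; lra). lra.
Qed.

Lemma vscal_vsub a x y : vscal a (vsub x y) = vsub (vscal a x) (vscal a y).
Proof. unfold vsub. rewrite vscal_addv, vscal_opp; auto. Qed.

Lemma seq_cv_vscal u a l : seq_cv u l -> seq_cv (fun n => vscal a (u n)) (vscal a l).
Proof.
  apply (seq_cv_bounded_map (vscal a) (Cmod a)); [apply vscal_vsub|].
  intro; rewrite vnorm_scal; lra.
Qed.

Lemma seq_cv_opp u l : seq_cv u l -> seq_cv (fun n => vopp (u n)) (vopp l).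
Proof.
  intro H. rewrite vopp_eq_rscal. apply (seq_cv_ext (fun n => rscal (-1) (u n))).
  { intro; rewrite vopp_eq_rscal; auto. }
  apply seq_cv_vscal; auto.
Qed.

Lemma seq_cv_sub u v x y :
  seq_cv u x -> seq_cv v y -> seq_cv (fun n => vsub (u n) (v n)) (vsub x y).
Proof. intros; apply seq_cv_add; auto; apply seq_cv_opp; auto. Qed.

Lemma seq_cv_rscal_coef (r : nat -> R) (x : X) s :
  Un_cv r s -> seq_cv (fun n => rscal (r n) x) (rscal s x).
Proof.
  intros H eps He. pose proof (vnorm_nonneg _ x).
  destruct (H (eps / (vnorm x + 1))) as [N HN]; [apply Rdiv_lt_0_compat; lra|].
  exists N; intros n Hn. specialize (HN n Hn). unfold R_dist in HN.
  fold (vsub (rscal (r n) x) (rscal s x)). rewrite <- rscal_subl, vnorm_rscal.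
  pose proof (Rabs_pos (r n - s)).
  apply Rle_lt_trans with (Rabs (r n - s) * (vnorm x + 1)); [nra|].
  apply Rmult_lt_reg_r with (/ (vnorm x + 1)); [apply Rinv_0_lt_compat; lra|].
  rewrite Rmult_assoc, Rinv_r, Rmult_1_r by lra. unfold Rdiv in HN. lra.
Qed.

Lemma seq_cv_norm_le u l C M :
  seq_cv u l -> (forall n, (M <= n)%nat -> vnorm (u n) <= C) -> vnorm l <= C.
Proof.
  intros H Hb. apply Rnot_lt_le; intro Hc.
  destruct (H (vnorm l - C) ltac:(lra)) as [N HN]. specialize (HN (max N M) ltac:(lia)).
  specialize (Hb (max N M) ltac:(lia)). fold (vsub (u (max N M)) l) in HN.
  rewrite vnorm_sub_sym in HN. pose proof (vnorm_rev l (u (max N M))). lra.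
Qed.

Lemma seq_cv_dist_le u l y C M :
  seq_cv u l -> (forall n, (M <= n)%nat -> vnorm (vsub (u n) y) <= C) -> vnorm (vsub l y) <= C.
Proof.
  intros H Hb. apply (seq_cv_norm_le (fun n => vsub (u n) y) _ C M); auto.
  apply seq_cv_sub; auto; apply seq_cv_const.
Qed.

Definition cauchy u : Prop :=
  forall eps, eps > 0 -> exists N, forall m n, (N <= m)%nat -> (N <= n)%nat ->
    vnorm (vsub (u m) (u n)) < eps.

Lemma cauchy_cv u : cauchy u -> exists l, seq_cv u l.
Proof. apply vcomplete. Qed.

Lemma cauchy_of_ordered u :
  (forall eps, eps > 0 -> exists N, forall m n, (N <= m)%nat -> (m <= n)%nat ->
     vnorm (vsub (u n) (u m)) < eps) -> cauchy u.
Proof.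
  intros H eps He. destruct (H eps He) as [N HN]. exists N. intros m n Hm Hn.
  destruct (Nat.le_ge_cases m n).
  - rewrite vnorm_sub_sym. apply HN; auto.
  - apply HN; auto.
Qed.

(** The sum of a series, or [vzero] when it diverges. *)
Definition series_value u : X :=
  match excluded_middle_informative (exists l, series_cv u l) with
  | left H => proj1_sig (constructive_indefinite_description _ H)
  | right _ => vzero
  end.

Lemma series_value_spec u l : series_cv u l -> series_cv u (series_value u).
Proof.
  intro H. unfold series_value. destruct excluded_middle_informative as [H'|H'].
  - destruct constructive_indefinite_description; auto.
  - exfalso; eauto.
Qed.

Lemma series_value_eq u l : series_cv u l -> series_value u = l.
Proof. intro H. exact (seq_cv_unique _ _ _ (series_value_spec u l H) H). Qed.

End Limits.

Lemma sum_term_le (f : nat -> R) i n :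
  (forall k, 0 <= f k) -> (i <= n)%nat -> f i <= sum_f_R0 f n.
Proof.
  intros H Hi. induction Hi.
  - destruct i; simpl; [lra|]. pose proof (cond_pos_sum f i H). lra.
  - simpl. specialize (H (S m)). lra.
Qed.

Lemma sum_const_le (f : nat -> R) c m : (forall n, f n <= c) -> sum_f_R0 f m <= INR (S m) * c.
Proof. intro H. rewrite Rmult_comm, <- sum_cte. apply sum_growing, H. Qed.

Section PartialSums.
Context {X : CBanach}.
Implicit Types (u v : nat -> X).

Lemma psum_ext u v n : (forall k, (k <= n)%nat -> u k = v k) -> psum u n = psum v n.
Proof.
  induction n; intro H; simpl; [apply H; lia|].
  rewrite IHn by (intros; apply H; lia). rewrite H by lia; auto.
Qed.

Lemma psum_add u v n : psum (fun k => vadd (u k) (v k)) n = vadd (psum u n) (psum v n).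
Proof. induction n; simpl; auto. rewrite IHn. apply vadd_swap. Qed.

Lemma psum_vscal u a n : psum (fun k => vscal a (u k)) n = vscal a (psum u n).
Proof. induction n; simpl; auto. rewrite IHn, vscal_addv; auto. Qed.

Lemma psum_rscal u r n : psum (fun k => rscal r (u k)) n = rscal r (psum u n).
Proof. apply psum_vscal. Qed.

Lemma psum_sub u v n : psum (fun k => vsub (u k) (v k)) n = vsub (psum u n) (psum v n).
Proof.
  unfold vsub. rewrite psum_add. f_equal.
  induction n; simpl; auto. rewrite IHn, vopp_add; auto.
Qed.

Lemma psum_zero n : psum (fun _ => (vzero : X)) n = vzero.
Proof. induction n; simpl; auto. rewrite IHn, vadd_0; auto. Qed.

Lemma psum_norm_le u n : vnorm (psum u n) <= sum_f_R0 (fun k => vnorm (u k)) n.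
Proof. induction n; simpl; [lra|]. eapply Rle_trans; [apply vnorm_triangle|]. lra. Qed.

Lemma psum_dist_le u (w : nat -> R) m M :
  (forall k, vnorm (u k) <= w k) -> (m <= M)%nat ->
  vnorm (vsub (psum u M) (psum u m)) <= sum_f_R0 w M - sum_f_R0 w m.
Proof.
  intros H Hm. induction Hm; [rewrite vsub_diag, vnorm_zero; lra|].
  simpl. rewrite vsub_add_r. eapply Rle_trans; [apply vnorm_triangle|]. specialize (H (S m0)). lra.
Qed.

Lemma psum_stationary u m :
  (forall k, (m < k)%nat -> u k = vzero) -> forall n, (m <= n)%nat -> psum u n = psum u m.
Proof. intros H n Hn. induction Hn; auto. simpl. rewrite H, vadd_0r by lia; auto. Qed.

Lemma psum_succ_sub u n : vsub (psum u (S n)) (psum u n) = u (S n).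
Proof. apply vsub_add_l. Qed.

Lemma psum_indicator (k : nat) (v : X) :
  psum (fun j => if Nat.eqb j k then v else vzero) k = v.
Proof.
  destruct k; simpl; auto. rewrite Nat.eqb_refl.
  rewrite (psum_ext _ (fun _ => vzero)), psum_zero, vadd_0; auto.
  intros j Hj. destruct (Nat.eqb_spec j (S k)); auto; lia.
Qed.

Lemma psum_exchange (al : nat -> R) (bt : nat -> nat -> R) v b M :
  psum (fun k => rscal (al k) (psum (fun n => rscal (bt k n) (v n)) b)) M
  = psum (fun n => rscal (sum_f_R0 (fun k => al k * bt k n) M) (v n)) b.
Proof.
  induction M.
  - simpl. rewrite <- psum_rscal. apply psum_ext. intros; rewrite rscal_mul; auto.
  - simpl psum at 1. rewrite IHM, <- psum_rscal, <- psum_add.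
    apply psum_ext. intros k _. rewrite rscal_mul, <- rscal_addl. auto.
Qed.

Lemma seq_cv_psum_rscal (s : nat -> nat -> R) (sl : nat -> R) v b :
  (forall n, Un_cv (fun M => s M n) (sl n)) ->
  seq_cv (fun M => psum (fun n => rscal (s M n) (v n)) b) (psum (fun n => rscal (sl n) (v n)) b).
Proof.
  intro H. induction b; simpl.
  - apply seq_cv_rscal_coef, H.
  - apply seq_cv_add; auto. apply seq_cv_rscal_coef, H.
Qed.

Lemma series_cv_ext u v l : (forall n, u n = v n) -> series_cv u l -> series_cv v l.
Proof. intros E. apply seq_cv_ext. intro; apply psum_ext; auto. Qed.

Lemma series_cv_add u v x y :
  series_cv u x -> series_cv v y -> series_cv (fun n => vadd (u n) (v n)) (vadd x y).
Proof. intros. eapply seq_cv_ext; [intro; symmetry; apply psum_add|]. apply seq_cv_add; auto. Qed.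

Lemma series_cv_vscal u a l : series_cv u l -> series_cv (fun n => vscal a (u n)) (vscal a l).
Proof. intros. eapply seq_cv_ext; [intro; symmetry; apply psum_vscal|]. apply seq_cv_vscal; auto. Qed.

Lemma series_cv_sub u v x y :
  series_cv u x -> series_cv v y -> series_cv (fun n => vsub (u n) (v n)) (vsub x y).
Proof. intros. eapply seq_cv_ext; [intro; symmetry; apply psum_sub|]. apply seq_cv_sub; auto. Qed.

Lemma series_cv_finite u m : (forall k, (m < k)%nat -> u k = vzero) -> series_cv u (psum u m).
Proof.
  intros H. apply (seq_cv_ext_eventually (fun _ => psum u m) _ _ m); [|apply seq_cv_const].
  intros; symmetry; apply psum_stationary; auto.
Qed.

End PartialSums.

Lemma series_cv_of_dominated {X : CBanach} (u : nat -> X) (w : nat -> R) :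
  (forall k, vnorm (u k) <= w k) -> Cauchy_crit (sum_f_R0 w) -> exists l, series_cv u l.
Proof.
  intros Hw Hc. apply cauchy_cv, cauchy_of_ordered. intros eps He.
  destruct (Hc eps He) as [N HN]. exists N. intros m n Hm Hmn.
  eapply Rle_lt_trans; [apply (psum_dist_le u w m n Hw Hmn)|].
  specialize (HN n m ltac:(lia) Hm). unfold R_dist in HN.
  pose proof (RRle_abs (sum_f_R0 w n - sum_f_R0 w m)). lra.
Qed.

Section Decomposition.
Context {X : CBanach} {D : nat -> X -> Prop} (hD : schauder_decomposition D).
Implicit Types (x y : X) (u : nat -> X).

Definition coef x : nat -> X :=
  proj1_sig (constructive_indefinite_description _ (proj1 (proj2 hD) x)).

Lemma coef_expansion x : expansion D x (coef x).
Proof. unfold coef. destruct constructive_indefinite_description; auto. Qed.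

Lemma coef_in x n : D n (coef x n).
Proof. apply (proj1 (coef_expansion x)). Qed.

Lemma coef_series x : series_cv (coef x) x.
Proof. apply (proj2 (coef_expansion x)). Qed.

Lemma coef_unique x u : expansion D x u -> forall n, coef x n = u n.
Proof. intros H n. destruct hD as [_ [_ U]]. apply (U x); auto. apply coef_expansion. Qed.

Lemma component_subspace n : subspace X (D n).
Proof. apply (proj1 hD n). Qed.

Lemma component_zero n : D n vzero.
Proof. apply (proj1 (component_subspace n)). Qed.

Lemma component_closed n : Defs.closed_set X (D n).
Proof. apply (proj1 hD n). Qed.

Lemma component_vsub n x y : D n x -> D n y -> D n (vsub x y).
Proof.
  destruct (component_subspace n) as [_ [Ha Hs]]. intros Hx Hy.
  apply Ha; auto. rewrite vopp_eq_rscal. apply Hs; auto.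
Qed.

Lemma coef_add x y n : coef (vadd x y) n = vadd (coef x n) (coef y n).
Proof.
  apply (coef_unique _ (fun k => vadd (coef x k) (coef y k))). split.
  - intro k. apply (component_subspace k); apply coef_in.
  - apply series_cv_add; apply coef_series.
Qed.

Lemma coef_vscal a x n : coef (vscal a x) n = vscal a (coef x n).
Proof.
  apply (coef_unique _ (fun k => vscal a (coef x k))). split.
  - intro k. apply (component_subspace k); apply coef_in.
  - apply series_cv_vscal; apply coef_series.
Qed.

Lemma coef_rscal r x n : coef (rscal r x) n = rscal r (coef x n).
Proof. apply coef_vscal. Qed.

Lemma coef_sub x y n : coef (vsub x y) n = vsub (coef x n) (coef y n).
Proof.
  apply (coef_unique _ (fun k => vsub (coef x k) (coef y k))). split.
  - intro k. apply component_vsub; apply coef_in.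
  - apply series_cv_sub; apply coef_series.
Qed.

Lemma coef_opp x n : coef (vopp x) n = vopp (coef x n).
Proof. rewrite !vopp_eq_rscal. apply coef_rscal. Qed.

Lemma coef_psum u m :
  (forall k, D k (u k)) -> (forall k, (m < k)%nat -> u k = vzero) ->
  forall n, coef (psum u m) n = u n.
Proof. intros H1 H2. apply (coef_unique _ u). split; auto. apply series_cv_finite; auto. Qed.

Lemma coef_of_component k v n : D k v -> coef v n = if Nat.eqb n k then v else vzero.
Proof.
  intros Hv. apply (coef_unique _ (fun n => if Nat.eqb n k then v else vzero)). split.
  - intro j. destruct (Nat.eqb_spec j k); subst; auto. apply component_zero.
  - pose proof (series_cv_finite (fun j => if Nat.eqb j k then v else vzero) k) as H.
    rewrite psum_indicator in H. apply H.
    intros j Hj. destruct (Nat.eqb_spec j k); auto; lia.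
Qed.

(** The partial-sum projection [P_(N+1)]. *)
Definition proj (N : nat) x : X := psum (coef x) N.

Lemma proj_add N x y : proj N (vadd x y) = vadd (proj N x) (proj N y).
Proof. unfold proj. rewrite <- psum_add. apply psum_ext; intros; apply coef_add. Qed.

Lemma proj_rscal N r x : proj N (rscal r x) = rscal r (proj N x).
Proof. unfold proj. rewrite <- psum_rscal. apply psum_ext; intros; apply coef_rscal. Qed.

Lemma proj_sub N x y : proj N (vsub x y) = vsub (proj N x) (proj N y).
Proof. unfold proj. rewrite <- psum_sub. apply psum_ext; intros; apply coef_sub. Qed.

Lemma proj_opp N x : proj N (vopp x) = vopp (proj N x).
Proof. rewrite !vopp_eq_rscal. apply proj_rscal. Qed.

Lemma proj_zero N : proj N vzero = vzero.
Proof. rewrite <- (rscal_0l vzero) at 1. rewrite proj_rscal, rscal_0l; auto. Qed.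

Lemma proj_cv x : seq_cv (fun N => proj N x) x.
Proof. apply coef_series. Qed.

Lemma proj_succ_sub N x : vsub (proj (S N) x) (proj N x) = coef x (S N).
Proof. apply psum_succ_sub. Qed.

Lemma coef_proj N x n : coef (proj N x) n = if Nat.leb n N then coef x n else vzero.
Proof.
  unfold proj. rewrite (psum_ext _ (fun k => if Nat.leb k N then coef x k else vzero)).
  - apply coef_psum.
    + intro k; destruct (Nat.leb k N); [apply coef_in|apply component_zero].
    + intros k Hk. destruct (Nat.leb_spec k N); auto; lia.
  - intros k Hk. destruct (Nat.leb_spec k N); auto; lia.
Qed.

Lemma proj_proj M N x : proj M (proj N x) = proj (Nat.min M N) x.
Proof.
  unfold proj at 1. rewrite (psum_ext _ (fun k => if Nat.leb k N then coef x k else vzero))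
    by (intros; apply coef_proj).
  destruct (Nat.le_ge_cases M N).
  - rewrite Nat.min_l by auto. apply psum_ext. intros k Hk. destruct (Nat.leb_spec k N); auto; lia.
  - rewrite Nat.min_r by auto. rewrite psum_stationary with (m := N); auto.
    + apply psum_ext. intros k Hk. destruct (Nat.leb_spec k N); auto; lia.
    + intros k Hk. destruct (Nat.leb_spec k N); auto; lia.
Qed.

Lemma proj_of_finite y b : (forall n, (b < n)%nat -> coef y n = vzero) -> proj b y = y.
Proof.
  intros H. apply (seq_cv_unique (fun N => proj N y)); [|apply proj_cv].
  apply (seq_cv_ext_eventually (fun _ => proj b y) _ _ b); [|apply seq_cv_const].
  intros; symmetry; apply psum_stationary; auto.
Qed.

Lemma multiplier_of_series (c : nat -> R) T :
  (forall x, series_cv (fun n => rscal (c n) (coef x n)) (T x)) -> multiplier D c T.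
Proof.
  intros H x xs Hx. eapply series_cv_ext; [|apply (H x)].
  intro n; simpl. rewrite (coef_unique x xs Hx n); auto.
Qed.

End Decomposition.

Lemma half_pow_small eps : eps > 0 -> exists N, forall n, (N <= n)%nat -> (/2) ^ n < eps.
Proof.
  intro He. destruct (pow_lt_1_zero (/2) ltac:(rewrite Rabs_right; lra) eps He) as [N HN].
  exists N. intros n Hn. specialize (HN n Hn).
  rewrite Rabs_right in HN by (apply Rle_ge, pow_le; lra). exact HN.
Qed.

Section Baire.
Context {X : CBanach}.

Lemma nested_balls_limit (c : nat -> X) (r : nat -> R) :
  (forall n, 0 < r n) -> (forall n, r (S n) <= r n / 2) ->
  (forall n, vnorm (vsub (c (S n)) (c n)) + r (S n) <= r n) ->
  exists l, forall n, vnorm (vsub l (c n)) <= r n.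
Proof.
  intros Hpos Hhalf Hstep.
  assert (Hnest : forall n m, (n <= m)%nat -> vnorm (vsub (c m) (c n)) + r m <= r n).
  { intros n m Hnm. induction Hnm; [rewrite vsub_diag, vnorm_zero; lra|].
    pose proof (Hstep m). pose proof (vnorm_dist (c (S m)) (c m) (c n)). lra. }
  assert (Hrad : forall n, r n <= r O * (/2) ^ n).
  { induction n; simpl; [lra|]. pose proof (Hhalf n). lra. }
  assert (Hcau : cauchy c).
  { apply cauchy_of_ordered. intros eps He.
    destruct (half_pow_small (eps / r O)) as [N HN]; [apply Rdiv_lt_0_compat; auto|].
    exists N. intros m n Hm Hmn.
    pose proof (Hnest m n Hmn). pose proof (Hnest N m Hm). pose proof (Hpos n). pose proof (Hrad N).
    pose proof (vnorm_nonneg _ (vsub (c m) (c N))). pose proof (Hpos O).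
    specialize (HN N (le_n _)). apply Rmult_lt_compat_l with (r := r O) in HN; auto.
    replace (r O * (eps / r O)) with eps in HN by (field; lra). lra. }
  destruct (cauchy_cv _ Hcau) as [l Hl]. exists l. intro n.
  apply (seq_cv_dist_le c l _ _ n Hl). intros m Hm. pose proof (Hnest n m Hm). pose proof (Hpos m). lra.
Qed.

Definition in_closure (A : X -> Prop) (y : X) : Prop :=
  forall eps, eps > 0 -> exists z, A z /\ vnorm (vsub y z) < eps.

Lemma ball_avoiding_set (A : X -> Prop) x0 r :
  0 < r -> ~ (forall y, vnorm (vsub y x0) < r -> in_closure A y) ->
  exists x1 r1, 0 < r1 /\ r1 <= r / 2 /\ vnorm (vsub x1 x0) + r1 <= r /\
    forall z, A z -> 2 * r1 <= vnorm (vsub x1 z).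
Proof.
  intros Hr Hn.
  apply not_all_ex_not in Hn as [y Hy]. apply imply_to_and in Hy as [Hy Hc].
  apply not_all_ex_not in Hc as [eps Hc]. apply imply_to_and in Hc as [He Hc].
  set (r1 := Rmin (eps/2) (Rmin (r - vnorm (vsub y x0)) (r/2))).
  assert (Hm1 := Rmin_l (eps/2) (Rmin (r - vnorm (vsub y x0)) (r/2))).
  assert (Hm2 := Rmin_r (eps/2) (Rmin (r - vnorm (vsub y x0)) (r/2))).
  assert (Hm3 := Rmin_l (r - vnorm (vsub y x0)) (r/2)).
  assert (Hm4 := Rmin_r (r - vnorm (vsub y x0)) (r/2)).
  assert (0 < r1) by (apply Rmin_pos; [lra|apply Rmin_pos; lra]).
  exists y, r1. fold r1 in Hm1, Hm2. split; [lra|]. split; [lra|]. split; [lra|].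
  intros z Hz. apply Rnot_lt_le. intro Hlt. apply Hc. exists z. split; auto. lra.
Qed.

Lemma baire_category (A : nat -> X -> Prop) :
  (forall x, exists k, A k x) ->
  exists k x0 r, r > 0 /\ forall y, vnorm (vsub y x0) < r -> in_closure (A k) y.
Proof.
  intro Hcover. apply NNPP; intro Hn.
  assert (Hs : forall (kp : nat * (X * R)), exists q : X * R, snd (snd kp) > 0 ->
     snd q > 0 /\ snd q <= snd (snd kp) / 2 /\
     vnorm (vsub (fst q) (fst (snd kp))) + snd q <= snd (snd kp) /\
     forall z, A (fst kp) z -> 2 * snd q <= vnorm (vsub (fst q) z)).
  { intros [k [x0 r]]. simpl.
    destruct (Rlt_dec 0 r) as [Hr|Hr]; [|exists (x0, r); intro; lra].
    destruct (ball_avoiding_set (A k) x0 r Hr) as [x1 [r1 H]].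
    { intro H. apply Hn. exists k, x0, r. split; auto. }
    exists (x1, r1). auto. }
  destruct (choice_fun _ Hs) as [f Hf].
  set (ball := fix ball (n : nat) : X * R :=
                 match n with O => (vzero, 1) | S m => f (m, ball m) end).
  assert (Hpos : forall n, snd (ball n) > 0).
  { induction n; simpl; [lra|]. apply (Hf (n, ball n)); auto. }
  assert (Hstep := fun n => Hf (n, ball n) (Hpos n)).
  destruct (nested_balls_limit (fun n => fst (ball n)) (fun n => snd (ball n))) as [l Hl].
  { exact Hpos. }
  { intro n. apply (Hstep n). }
  { intro n. apply (Hstep n). }
  destruct (Hcover l) as [k Hk].
  destruct (Hf (k, ball k) (Hpos k)) as [_ [_ [_ Hfar]]]. specialize (Hfar l Hk).
  specialize (Hl (S k)). simpl in Hl. rewrite vnorm_sub_sym in Hfar.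
  pose proof (Hpos (S k)). simpl in *. lra.
Qed.

End Baire.

Section UniformBound.
Context {X : CBanach} {D : nat -> X -> Prop} (hD : schauder_decomposition D).

Definition proj_bounded (k : R) (x : X) : Prop := forall N, vnorm (proj hD N x) <= k.

Lemma proj_bounded_sub a b x y :
  proj_bounded a x -> proj_bounded b y -> proj_bounded (a + b) (vsub x y).
Proof.
  intros Hx Hy N. rewrite proj_sub. eapply Rle_trans; [apply vnorm_sub_le|].
  specialize (Hx N); specialize (Hy N); lra.
Qed.

Lemma proj_bounded_add a b x y :
  proj_bounded a x -> proj_bounded b y -> proj_bounded (a + b) (vadd x y).
Proof.
  intros Hx Hy N. rewrite proj_add. eapply Rle_trans; [apply vnorm_triangle|].
  specialize (Hx N); specialize (Hy N); lra.
Qed.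

Lemma proj_bounded_rscal a t x : proj_bounded a x -> proj_bounded (Rabs t * a) (rscal t x).
Proof.
  intros Hx N. rewrite proj_rscal, vnorm_rscal. apply Rmult_le_compat_l; auto. apply Rabs_pos.
Qed.

Lemma proj_bounded_le a b x : a <= b -> proj_bounded a x -> proj_bounded b x.
Proof. intros H Hx N. specialize (Hx N); lra. Qed.

Lemma proj_bounded_zero : proj_bounded 0 vzero.
Proof. intro N. rewrite proj_zero, vnorm_zero; lra. Qed.

Lemma proj_bounded_exists x : exists k : nat, proj_bounded (INR k) x.
Proof.
  destruct (proj_cv hD x 1 ltac:(lra)) as [N0 HN0].
  set (f := fun M => vnorm (proj hD M x)).
  destruct (INR_unbounded (vnorm x + 1 + sum_f_R0 f N0)) as [m Hm]. exists m. intro N.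
  pose proof (cond_pos_sum f N0 (fun _ => vnorm_nonneg _ _)). pose proof (vnorm_nonneg _ x).
  destruct (Nat.le_ge_cases N N0) as [HN|HN].
  - pose proof (sum_term_le f N N0 (fun _ => vnorm_nonneg _ _) HN). unfold f in *. lra.
  - specialize (HN0 N HN). pose proof (vnorm_rev (proj hD N x) x). unfold vsub, f in *. lra.
Qed.

Lemma proj_bounded_near_origin :
  exists (k : nat) r, r > 0 /\
    forall w, vnorm w < r -> in_closure (proj_bounded (2 * INR k)) w.
Proof.
  destruct (baire_category (fun k => proj_bounded (INR k)) proj_bounded_exists)
    as [k [x0 [r [Hr Hb]]]].
  exists k, r. split; auto. intros w Hw eps He.
  destruct (Hb (vadd x0 w) ltac:(rewrite vsub_add_l; auto) (eps/2) ltac:(lra)) as [z1 [Hz1 Hd1]].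
  destruct (Hb x0 ltac:(rewrite vsub_diag, vnorm_zero; lra) (eps/2) ltac:(lra)) as [z2 [Hz2 Hd2]].
  exists (vsub z1 z2). split.
  - replace (2 * INR k) with (INR k + INR k) by ring. apply proj_bounded_sub; auto.
  - replace (vsub w (vsub z1 z2)) with (vsub (vsub (vadd x0 w) z1) (vsub x0 z2))
      by (rewrite !vsub_sub_r, vsub_rcomm, vsub_add_l; auto).
    eapply Rle_lt_trans; [apply vnorm_sub_le|]. lra.
Qed.

Lemma proj_bounded_dense :
  exists C, 0 <= C /\ forall y eps, eps > 0 ->
    exists z, proj_bounded (C * vnorm y) z /\ vnorm (vsub y z) < eps.
Proof.
  destruct proj_bounded_near_origin as [k [r [Hr Hw]]].
  pose proof (pos_INR k).
  exists (4 * INR k / r). split; [apply Rmult_le_pos; [lra|left; apply Rinv_0_lt_compat; lra]|].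
  intros y eps He.
  destruct (Req_dec (vnorm y) 0) as [Hy0|Hy0].
  { apply vnorm_eq0 in Hy0. subst y. exists vzero.
    rewrite vnorm_zero, Rmult_0_r, vsub_diag, vnorm_zero. split; [apply proj_bounded_zero|lra]. }
  pose proof (vnorm_nonneg _ y) as Hyp.
  set (t := r / (2 * vnorm y)).
  assert (Ht : 0 < t) by (unfold t; apply Rdiv_lt_0_compat; lra).
  assert (Hwn : vnorm (rscal t y) < r).
  { rewrite vnorm_rscal, Rabs_right by lra. unfold t. field_simplify; lra. }
  destruct (Hw _ Hwn (eps * t)) as [z' [Hz' Hd]]; [apply Rmult_gt_0_compat; lra|].
  exists (rscal (/t) z'). split.
  - eapply proj_bounded_le; [|apply proj_bounded_rscal; eauto].
    rewrite Rabs_right by (left; apply Rinv_0_lt_compat; lra).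
    unfold t. right. field. split; lra.
  - replace y with (rscal (/t) (rscal t y)) at 1 by (rewrite rscal_mul, Rinv_l by lra; apply rscal_1).
    rewrite <- rscal_subr, vnorm_rscal, Rabs_right by (left; apply Rinv_0_lt_compat; lra).
    apply Rmult_lt_reg_l with t; auto. rewrite <- Rmult_assoc, Rinv_r by lra. lra.
Qed.

(** The limits [z N] are the partial sums of an expansion of [wl] (each [D n] being closed),
    which by uniqueness is the expansion of [wl]. *)
Lemma proj_of_uniform_limit (w : nat -> X) wl (z : nat -> X) :
  seq_cv w wl ->
  (forall eps, eps > 0 -> exists J, forall j, (J <= j)%nat -> forall N,
     vnorm (vsub (proj hD N (w j)) (z N)) <= eps) ->
  forall N, proj hD N wl = z N.
Proof.
  intros Hw Hunif.
  assert (Hz : forall N, seq_cv (fun j => proj hD N (w j)) (z N)).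
  { intros N eps He. destruct (Hunif (eps/2) ltac:(lra)) as [J HJ].
    exists J. intros j Hj. specialize (HJ j Hj N). unfold vsub in HJ. lra. }
  set (e := fun n => match n with O => z O | S m => vsub (z (S m)) (z m) end).
  assert (Hpe : forall N, psum e N = z N).
  { induction N; auto. simpl. rewrite IHN, vadd_comm. apply vadd_vsub. }
  assert (Hexp : expansion D wl e).
  { split.
    - intro n. apply (component_closed hD n (fun j => coef hD (w j) n)); [intro; apply coef_in|].
      destruct n; [apply (Hz O)|].
      eapply seq_cv_ext; [|apply seq_cv_sub; [apply (Hz (S n))|apply (Hz n)]].
      intro j. apply proj_succ_sub.
    - intros eps He.
      destruct (Hunif (eps/3) ltac:(lra)) as [J1 HJ1].
      destruct (Hw (eps/3) ltac:(lra)) as [J2 HJ2].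
      set (j := max J1 J2).
      destruct (proj_cv hD (w j) (eps/3) ltac:(lra)) as [N0 HN0].
      exists N0. intros N HN. rewrite Hpe. fold (vsub (z N) wl).
      specialize (HJ1 j ltac:(lia) N). specialize (HJ2 j ltac:(lia)). specialize (HN0 N HN).
      fold (vsub (w j) wl) in HJ2. fold (vsub (proj hD N (w j)) (w j)) in HN0.
      eapply Rle_lt_trans; [apply (vnorm_dist _ (proj hD N (w j)))|].
      eapply Rle_lt_trans; [apply Rplus_le_compat_l, (vnorm_dist _ (w j))|].
      rewrite vnorm_sub_sym in HJ1. lra. }
  intro N. unfold proj. rewrite (psum_ext (coef hD wl) e), Hpe; auto.
  intros k _. apply (coef_unique hD); auto.
Qed.

Lemma proj_bounded_limit (w : nat -> X) wl eta :
  seq_cv w wl ->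
  (forall eps, eps > 0 -> exists J, forall i j, (J <= i)%nat -> (J <= j)%nat ->
     proj_bounded eps (vsub (w i) (w j))) ->
  (forall j, proj_bounded eta (w j)) ->
  proj_bounded eta wl.
Proof.
  intros Hw Hc Hb.
  assert (Hz : forall N, exists zN, seq_cv (fun j => proj hD N (w j)) zN).
  { intro N. apply cauchy_cv. intros eps He. destruct (Hc (eps/2) ltac:(lra)) as [J HJ].
    exists J. intros m n Hm Hn. specialize (HJ m n Hm Hn N). rewrite proj_sub in HJ. lra. }
  destruct (choice_fun _ Hz) as [z Hzf].
  assert (Hunif : forall eps, eps > 0 -> exists J, forall j, (J <= j)%nat -> forall N,
            vnorm (vsub (proj hD N (w j)) (z N)) <= eps).
  { intros eps He. destruct (Hc eps He) as [J HJ]. exists J. intros j Hj N.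
    rewrite vnorm_sub_sym.
    apply (seq_cv_dist_le (fun i => proj hD N (w i)) (z N) (proj hD N (w j)) eps J (Hzf N)).
    intros i Hi. rewrite <- proj_sub. apply HJ; auto. }
  intro N. rewrite (proj_of_uniform_limit w wl z Hw Hunif N).
  apply (seq_cv_norm_le _ _ _ O (Hzf N)). intros; apply Hb.
Qed.

Lemma proj_bounded_vsub_sym a x y : proj_bounded a (vsub x y) -> proj_bounded a (vsub y x).
Proof. intros H N. rewrite proj_sub, vnorm_sub_sym, <- proj_sub. apply H. Qed.

Lemma proj_bounded_geometric_series c (z : nat -> X) x :
  0 <= c -> (forall j, proj_bounded (c * (/2) ^ j) (z j)) -> series_cv z x ->
  proj_bounded (2 * c) x.
Proof.
  intros Hc Hz Hx.
  assert (Hdiff : forall m n, (m <= n)%nat ->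
            proj_bounded (c * ((/2) ^ m - (/2) ^ n)) (vsub (psum z n) (psum z m))).
  { intros m n Hmn. induction Hmn.
    - rewrite vsub_diag. eapply proj_bounded_le; [|apply proj_bounded_zero]. lra.
    - simpl psum. rewrite vsub_add_r.
      eapply proj_bounded_le; [|apply proj_bounded_add; [apply IHHmn|apply Hz]].
      simpl. right; field. }
  apply (proj_bounded_limit (psum z)); auto.
  - intros eps He. destruct (half_pow_small (eps / (c + 1))) as [M HM];
      [apply Rdiv_lt_0_compat; lra|].
    assert (Hsmall : forall m n, (M <= m)%nat -> (m <= n)%nat ->
              proj_bounded eps (vsub (psum z n) (psum z m))).
    { intros m n Hm Hmn. eapply proj_bounded_le; [|apply (Hdiff m n Hmn)].
      specialize (HM m Hm). pose proof (pow_le (/2) n ltac:(lra)).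
      apply Rmult_lt_compat_l with (r := c + 1) in HM; [|lra].
      replace ((c + 1) * (eps / (c + 1))) with eps in HM by (field; lra).
      pose proof (pow_le (/2) m ltac:(lra)). nra. }
    exists M. intros i j Hi Hj. destruct (Nat.le_ge_cases i j).
    + apply proj_bounded_vsub_sym, Hsmall; auto.
    + apply Hsmall; auto.
  - intro n. apply (proj_bounded_le (2 * c * (1 - (/2) ^ S n)));
      [pose proof (pow_le (/2) (S n) ltac:(lra)); nra|].
    induction n.
    + eapply proj_bounded_le; [|apply (Hz O)]. simpl. lra.
    + simpl psum. eapply proj_bounded_le; [|apply proj_bounded_add; [apply IHn|apply Hz]].
      simpl. right; field.
Qed.

Lemma proj_uniformly_bounded :
  exists beta, 0 <= beta /\ forall N x, vnorm (proj hD N x) <= beta * vnorm x.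
Proof.
  destruct proj_bounded_dense as [C [HC Hdense]].
  exists (2 * C). split; [lra|]. intros N x.
  destruct (Req_dec (vnorm x) 0) as [Hx0|Hx0].
  { apply vnorm_eq0 in Hx0. subst x. rewrite proj_zero, !vnorm_zero; lra. }
  pose proof (vnorm_nonneg _ x) as Hxp.
  assert (Hstep : forall (p : nat * X), exists z, proj_bounded (C * vnorm (snd p)) z /\
            vnorm (vsub (snd p) z) < vnorm x * (/2) ^ S (fst p)).
  { intros [j y]. apply Hdense. simpl.
    apply Rmult_gt_0_compat; [lra|]. apply (pow_lt (/2) (S j)); lra. }
  destruct (choice_fun _ Hstep) as [g Hg].
  set (rest := fix rest (j : nat) : X := match j with O => x | S i => vsub (rest i) (g (i, rest i)) end).
  set (z := fun j => g (j, rest j)).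
  assert (Hrest : forall j, vnorm (rest j) <= vnorm x * (/2) ^ j).
  { destruct j; simpl; [lra|]. destruct (Hg (j, rest j)) as [_ H]. simpl in H. lra. }
  assert (Hpsum : forall n, psum z n = vsub x (rest (S n))).
  { induction n; simpl psum.
    - change (rest 1%nat) with (vsub x (z O)). rewrite vsub_sub_r, vsub_diag, vadd_0; auto.
    - rewrite IHn. change (rest (S (S n))) with (vsub (rest (S n)) (z (S n))).
      rewrite vsub_sub_r. auto. }
  assert (Hseries : series_cv z x).
  { intros eps He. destruct (half_pow_small (eps / vnorm x)) as [M HM];
      [apply Rdiv_lt_0_compat; lra|].
    exists M. intros n Hn. rewrite Hpsum. fold (vsub (vsub x (rest (S n))) x).
    rewrite vsub_rcomm, vsub_diag. unfold vsub. rewrite vadd_0, vnorm_opp.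
    specialize (HM (S n) ltac:(lia)). pose proof (Hrest (S n)).
    apply Rmult_lt_compat_l with (r := vnorm x) in HM; [|lra].
    replace (vnorm x * (eps / vnorm x)) with eps in HM by (field; lra). lra. }
  enough (Hb : proj_bounded (2 * (C * vnorm x)) x) by (rewrite Rmult_assoc; apply Hb).
  apply (proj_bounded_geometric_series _ z); [apply Rmult_le_pos; auto| |auto].
  intro j. eapply proj_bounded_le; [|apply (Hg (j, rest j))]. simpl.
  rewrite Rmult_assoc. apply Rmult_le_compat_l; auto.
Qed.

End UniformBound.

Fixpoint variation (d : nat -> R) (M : nat) : R :=
  match M with O => 0 | S m => variation d m + Rabs (d m - d (S m)) end.

Lemma variation_nonneg d M : 0 <= variation d M.
Proof. induction M; simpl; [lra|]. pose proof (Rabs_pos (d M - d (S M))). lra. Qed.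

Lemma variation_nondecreasing d M : (forall k, d k <= d (S k)) -> variation d M = d M - d O.
Proof.
  intro H. induction M; simpl; [lra|]. rewrite IHM, Rabs_left1; [lra|]. specialize (H M); lra.
Qed.

Lemma variation_nonincreasing d M : (forall k, d (S k) <= d k) -> variation d M = d O - d M.
Proof.
  intro H. induction M; simpl; [lra|]. rewrite IHM, Rabs_right; [lra|]. specialize (H M); lra.
Qed.

Lemma variation_nonneg_le_sum d M : (forall k, 0 <= d k) -> variation d M <= 2 * sum_f_R0 d M.
Proof.
  intro H. enough (variation d M <= 2 * sum_f_R0 d M - d M) by (pose proof (H M); lra).
  induction M; simpl; [specialize (H O); lra|].
  assert (Rabs (d M - d (S M)) <= d M + d (S M)) by (pose proof (H M); pose proof (H (S M)); apply Rabs_le; lra).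
  pose proof (sum_term_le d M M H (le_n _)). pose proof (H (S M)). lra.
Qed.

Lemma variation_lincomb (d e : nat -> R) (a b : R) M :
  variation (fun n => a * d n + b * e n) M <= Rabs a * variation d M + Rabs b * variation e M.
Proof.
  induction M; simpl; [lra|].
  replace (a * d M + b * e M - (a * d (S M) + b * e (S M)))
    with (a * (d M - d (S M)) + b * (e M - e (S M))) by ring.
  eapply Rle_trans; [apply Rplus_le_compat_l, Rabs_triang|]. rewrite !Rabs_mult. lra.
Qed.

Definition bounded_variation (d : nat -> R) (V : R) : Prop := forall M, Rabs (d M) + variation d M <= V.

Lemma bounded_variation_abs d V k : bounded_variation d V -> Rabs (d k) <= V.
Proof. intro H. specialize (H k). pose proof (variation_nonneg d k). lra. Qed.

Lemma bounded_variation_nonneg d V : bounded_variation d V -> 0 <= V.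
Proof. intro H. pose proof (bounded_variation_abs d V O H). pose proof (Rabs_pos (d O)). lra. Qed.

Lemma bounded_variation_mul d e V W :
  bounded_variation d V -> bounded_variation e W -> bounded_variation (fun n => d n * e n) (3 * V * W).
Proof.
  intros Hd He M.
  assert (Hv : variation (fun n => d n * e n) M <= V * variation e M + W * variation d M).
  { induction M; simpl; [lra|].
    replace (d M * e M - d (S M) * e (S M))
      with (d M * (e M - e (S M)) + e (S M) * (d M - d (S M))) by ring.
    eapply Rle_trans; [apply Rplus_le_compat_l, Rabs_triang|]. rewrite !Rabs_mult.
    pose proof (bounded_variation_abs d V M Hd). pose proof (bounded_variation_abs e W (S M) He).
    pose proof (Rabs_pos (e M - e (S M))). pose proof (Rabs_pos (d M - d (S M))).
    pose proof (Rabs_pos (d M)). pose proof (Rabs_pos (e (S M))). nra. }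
  rewrite Rabs_mult. pose proof (bounded_variation_abs d V M Hd). pose proof (bounded_variation_abs e W M He).
  pose proof (Hd M); pose proof (He M). pose proof (variation_nonneg d M); pose proof (variation_nonneg e M).
  pose proof (Rabs_pos (d M)). pose proof (Rabs_pos (e M)). nra.
Qed.

Lemma bounded_variation_monotone d :
  (forall k, 0 <= d k <= 1) -> ((forall k, d k <= d (S k)) \/ (forall k, d (S k) <= d k)) ->
  bounded_variation d 2.
Proof.
  intros H [Hm|Hm] M; [rewrite variation_nondecreasing|rewrite variation_nonincreasing]; auto;
    pose proof (H M); pose proof (H O); rewrite Rabs_right; lra.
Qed.

Lemma bounded_variation_lincomb d e a b V W :
  bounded_variation d V -> bounded_variation e W ->
  bounded_variation (fun n => a * d n + b * e n) (Rabs a * V + Rabs b * W).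
Proof.
  intros Hd He M. specialize (Hd M); specialize (He M). pose proof (variation_lincomb d e a b M).
  pose proof (Rabs_triang (a * d M) (b * e M)). rewrite !Rabs_mult in H0.
  pose proof (Rabs_pos a); pose proof (Rabs_pos b). nra.
Qed.

Section AbelSummation.
Context {X : CBanach}.
Implicit Types (u : nat -> X).

Definition abel_remainder (d : nat -> R) (u : nat -> X) (M : nat) : X :=
  match M with O => vzero | S m => psum (fun k => rscal (d k - d (S k)) (psum u k)) m end.

Lemma abel_remainder_S d u M :
  abel_remainder d u (S M) = vadd (abel_remainder d u M) (rscal (d M - d (S M)) (psum u M)).
Proof. destruct M; simpl; auto. rewrite vadd_0; auto. Qed.

Lemma abel_summation d u M :
  psum (fun n => rscal (d n) (u n)) M = vadd (rscal (d M) (psum u M)) (abel_remainder d u M).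
Proof.
  induction M; [simpl; rewrite vadd_0r; auto|].
  simpl psum. rewrite IHM, abel_remainder_S, rscal_addr, rscal_subl.
  set (A := rscal (d M) (psum u M)). set (B := rscal (d (S M)) (psum u M)).
  set (C := rscal (d (S M)) (u (S M))). set (R0 := abel_remainder d u M).
  rewrite (vadd_comm _ R0 (vsub A B)), vadd_assoc, (vadd_comm _ B C).
  rewrite <- (vadd_assoc _ C B), (vadd_comm _ B (vsub A B)), vadd_vsub.
  rewrite (vadd_comm _ C A), <- !vadd_assoc, (vadd_comm _ R0 C); auto.
Qed.

Lemma abel_remainder_norm_le d u M B :
  (forall k, (k <= M)%nat -> vnorm (psum u k) <= B) -> vnorm (abel_remainder d u M) <= variation d M * B.
Proof.
  intro H. induction M; [simpl; rewrite vnorm_zero; lra|].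
  rewrite abel_remainder_S. eapply Rle_trans; [apply vnorm_triangle|]. simpl. rewrite vnorm_rscal.
  assert (0 <= B) by (eapply Rle_trans; [apply vnorm_nonneg|apply (H O); lia]).
  pose proof (Rabs_pos (d M - d (S M))). pose proof (H M ltac:(lia)).
  assert (vnorm (abel_remainder d u M) <= variation d M * B) by (apply IHM; intros; apply H; lia).
  nra.
Qed.

Lemma weighted_psum_norm_le d u M B :
  (forall k, (k <= M)%nat -> vnorm (psum u k) <= B) ->
  vnorm (psum (fun n => rscal (d n) (u n)) M) <= (Rabs (d M) + variation d M) * B.
Proof.
  intro H. rewrite abel_summation. eapply Rle_trans; [apply vnorm_triangle|]. rewrite vnorm_rscal.
  pose proof (abel_remainder_norm_le d u M B H). specialize (H M (le_n _)).
  pose proof (Rabs_pos (d M)). nra.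
Qed.

End AbelSummation.

Definition mult {X : CBanach} {D : nat -> X -> Prop} (hD : schauder_decomposition D)
  (d : nat -> R) (x : X) : X :=
  series_value (fun n => rscal (d n) (coef hD x n)).

Section Multipliers.
Context {X : CBanach} {D : nat -> X -> Prop} (hD : schauder_decomposition D).
Context (beta : R) (hb0 : 0 <= beta) (hbeta : forall N x, vnorm (proj hD N x) <= beta * vnorm x).
Implicit Types (x y : X) (d e : nat -> R).

Lemma coef_norm_le x n : vnorm (coef hD x n) <= 2 * beta * vnorm x.
Proof.
  pose proof (vnorm_nonneg _ x). destruct n.
  - change (coef hD x 0%nat) with (proj hD 0%nat x). pose proof (hbeta 0%nat x). nra.
  - rewrite <- proj_succ_sub. eapply Rle_trans; [apply vnorm_sub_le|].
    pose proof (hbeta (S n) x); pose proof (hbeta n x); lra.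
Qed.

Lemma mult_partial_norm_le d V x M :
  bounded_variation d V -> vnorm (psum (fun n => rscal (d n) (coef hD x n)) M) <= V * (beta * vnorm x).
Proof.
  intro H. eapply Rle_trans; [apply weighted_psum_norm_le; intros; apply hbeta|].
  apply Rmult_le_compat_r; auto. apply Rmult_le_pos; auto; apply vnorm_nonneg.
Qed.

Lemma mult_partial_segment d x m M : (m <= M)%nat ->
  vsub (psum (fun n => rscal (d n) (coef hD x n)) M) (psum (fun n => rscal (d n) (coef hD x n)) m)
  = psum (fun n => rscal (d n) (coef hD (vsub x (proj hD m x)) n)) M.
Proof.
  intro HmM.
  assert (E : psum (fun n => rscal (d n) (coef hD x n)) m
              = psum (fun n => rscal (d n) (coef hD (proj hD m x) n)) M).
  { rewrite (psum_stationary (fun n => rscal (d n) (coef hD (proj hD m x) n)) m); auto.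
    - apply psum_ext. intros k Hk. rewrite coef_proj. destruct (Nat.leb_spec k m); auto; lia.
    - intros k Hk. rewrite coef_proj. destruct (Nat.leb_spec k m); [lia|]. apply rscal_0r. }
  rewrite E, <- psum_sub. apply psum_ext. intros k _. rewrite coef_sub, rscal_subr; auto.
Qed.

Lemma mult_series_cv d V x :
  bounded_variation d V -> series_cv (fun n => rscal (d n) (coef hD x n)) (mult hD d x).
Proof.
  intro HV. unfold mult. destruct (cauchy_cv (psum (fun n => rscal (d n) (coef hD x n)))) as [l Hl].
  2:{ apply (series_value_spec _ l Hl). }
  apply cauchy_of_ordered. intros eps He.
  pose proof (bounded_variation_nonneg d V HV) as HV0. pose proof (Rmult_le_pos _ _ HV0 hb0).
  destruct (proj_cv hD x (eps / (V * beta + 1))) as [N HN]; [apply Rdiv_lt_0_compat; lra|].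
  exists N. intros m M Hm HmM. rewrite mult_partial_segment by auto.
  eapply Rle_lt_trans; [apply mult_partial_norm_le; eauto|].
  set (z := vsub x (proj hD m x)). pose proof (vnorm_nonneg _ z).
  specialize (HN m Hm). fold (vsub (proj hD m x) x) in HN. rewrite vnorm_sub_sym in HN. fold z in HN.
  apply Rle_lt_trans with ((V * beta + 1) * vnorm z); [nra|].
  apply Rmult_lt_compat_l with (r := V * beta + 1) in HN; [|lra].
  replace ((V * beta + 1) * (eps / (V * beta + 1))) with eps in HN by (field; lra). lra.
Qed.

Lemma mult_norm_le d V x : bounded_variation d V -> vnorm (mult hD d x) <= V * beta * vnorm x.
Proof.
  intro H. rewrite Rmult_assoc. apply (seq_cv_norm_le _ _ _ O (mult_series_cv d V x H)).
  intros; apply mult_partial_norm_le; auto.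
Qed.

Lemma mult_eq d V x l :
  bounded_variation d V -> series_cv (fun n => rscal (d n) (coef hD x n)) l -> mult hD d x = l.
Proof. intros H Hl. apply (seq_cv_unique _ _ _ (mult_series_cv d V x H) Hl). Qed.

Lemma mult_add d V x y : bounded_variation d V -> mult hD d (vadd x y) = vadd (mult hD d x) (mult hD d y).
Proof.
  intro H. apply (mult_eq d V); auto.
  eapply series_cv_ext; [|apply series_cv_add; apply (mult_series_cv d V); auto].
  intro n. simpl. rewrite coef_add, rscal_addr; auto.
Qed.

Lemma mult_vscal d V a x : bounded_variation d V -> mult hD d (vscal a x) = vscal a (mult hD d x).
Proof.
  intro H. apply (mult_eq d V); auto.
  eapply series_cv_ext; [|apply series_cv_vscal; apply (mult_series_cv d V); auto].
  intro n. simpl. rewrite coef_vscal, vscal_rscal; auto.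
Qed.

Lemma mult_sub d V x y : bounded_variation d V -> mult hD d (vsub x y) = vsub (mult hD d x) (mult hD d y).
Proof.
  intro H. apply (mult_eq d V); auto.
  eapply series_cv_ext; [|apply series_cv_sub; apply (mult_series_cv d V); auto].
  intro n. simpl. rewrite coef_sub, rscal_subr; auto.
Qed.

Lemma mult_lincomb d e a b V W x : bounded_variation d V -> bounded_variation e W ->
  mult hD (fun n => a * d n + b * e n) x = vadd (rscal a (mult hD d x)) (rscal b (mult hD e x)).
Proof.
  intros Hd He. apply (mult_eq _ _ _ _ (bounded_variation_lincomb d e a b V W Hd He)).
  eapply series_cv_ext;
    [|apply series_cv_add; apply series_cv_vscal; [apply (mult_series_cv d V x Hd)|apply (mult_series_cv e W x He)]].
  intro n; simpl. fold (rscal a (rscal (d n) (coef hD x n))). fold (rscal b (rscal (e n) (coef hD x n))).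
  rewrite !rscal_mul, <- rscal_addl; auto.
Qed.

Lemma mult_bounded_op d V : bounded_variation d V -> bounded_op (mult hD d).
Proof.
  intro H. split; [|split].
  - intros; eapply mult_add; eauto.
  - intros; eapply mult_vscal; eauto.
  - exists (V * beta). intro; apply (mult_norm_le d V); auto.
Qed.

Lemma mult_multiplier d V : bounded_variation d V -> multiplier D d (mult hD d).
Proof. intro H. apply (multiplier_of_series hD). intro x. apply (mult_series_cv d V); auto. Qed.

Lemma mult_of_finite d V y b : bounded_variation d V -> (forall n, (b < n)%nat -> coef hD y n = vzero) ->
  mult hD d y = psum (fun n => rscal (d n) (coef hD y n)) b.
Proof.
  intros H Hy. apply (mult_eq d V); auto. apply series_cv_finite.
  intros k Hk. rewrite Hy; auto. apply rscal_0r.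
Qed.

Lemma mult_component d V k v : bounded_variation d V -> D k v -> mult hD d v = rscal (d k) v.
Proof.
  intros H Hv. rewrite (mult_of_finite d V v k); auto.
  - rewrite <- (psum_indicator k (rscal (d k) v)). apply psum_ext. intros j _.
    rewrite (coef_of_component hD k v j Hv). destruct (Nat.eqb_spec j k); subst; auto. apply rscal_0r.
  - intros n Hn. rewrite (coef_of_component hD k v n Hv). destruct (Nat.eqb_spec n k); auto; lia.
Qed.

Lemma mult_psum d V (f : nat -> X) M :
  bounded_variation d V -> mult hD d (psum f M) = psum (fun n => mult hD d (f n)) M.
Proof. intro H. induction M; simpl; auto. rewrite (mult_add d V), IHM; auto. Qed.

Lemma mult_comp d e V W x : bounded_variation d V -> bounded_variation e W ->
  mult hD d (mult hD e x) = mult hD (fun n => d n * e n) x.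
Proof.
  intros Hd He. symmetry. apply (mult_eq _ (3 * V * W)); [apply bounded_variation_mul; auto|].
  eapply seq_cv_ext; [|apply (seq_cv_bounded_map (mult hD d) (V * beta));
    [intros; eapply mult_sub; eauto|intro; apply (mult_norm_le d V); auto|apply (mult_series_cv e W x He)]].
  intro M. simpl. rewrite (mult_psum d V) by auto. apply psum_ext. intros k _.
  unfold rscal at 1. rewrite (mult_vscal d V), (mult_component d V k) by (auto; apply coef_in).
  unfold rscal. rewrite <- vscal_mul, Cmul_RtoC, Rmult_comm. auto.
Qed.

End Multipliers.

Section Rademacher.
Context {X : CBanach}.
Implicit Types (acc x y : X) (xs : list X).

Lemma norm_le_rad_aux acc xs : vnorm acc <= rad_aux X acc xs.
Proof.
  revert acc; induction xs as [|x xs IH]; intro acc; simpl; [lra|].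
  pose proof (IH (vadd acc x)). pose proof (IH (vadd acc (vopp x))).
  pose proof (vnorm_triangle _ (vadd acc x) (vadd acc (vopp x))) as Ht.
  rewrite vadd_swap, vadd_opp, vadd_0r, vadd_double, vnorm_rscal, Rabs_right in Ht by lra. lra.
Qed.

Lemma rad_aux_nonneg acc xs : 0 <= rad_aux X acc xs.
Proof. pose proof (norm_le_rad_aux acc xs). pose proof (vnorm_nonneg _ acc). lra. Qed.

Lemma Rnorm_nonneg xs : 0 <= Rnorm xs.
Proof. apply rad_aux_nonneg. Qed.

Lemma rad_aux_le_cons acc x xs :
  rad_aux X acc xs <= (rad_aux X (vadd acc x) xs + rad_aux X (vadd acc (vopp x)) xs) / 2.
Proof.
  revert acc; induction xs as [|y ys IH]; intro acc; simpl.
  - pose proof (vnorm_triangle _ (vadd acc x) (vadd acc (vopp x))) as H.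
    rewrite vadd_swap, vadd_opp, vadd_0r, vadd_double, vnorm_rscal, Rabs_right in H by lra. lra.
  - pose proof (IH (vadd acc y)). pose proof (IH (vadd acc (vopp y))).
    rewrite !(vadd_rcomm acc y), !(vadd_rcomm acc (vopp y)) in *. lra.
Qed.

Lemma Rnorm_le_cons x xs : Rnorm xs <= Rnorm (x :: xs).
Proof. unfold Rnorm. simpl. pose proof (rad_aux_le_cons vzero x xs). lra. Qed.

Lemma rad_aux_ge_member acc xs x :
  In x xs -> (vnorm (vadd acc x) + vnorm (vadd acc (vopp x))) / 2 <= rad_aux X acc xs.
Proof.
  revert acc; induction xs as [|y ys IH]; intros acc Hin; simpl in *; [contradiction|].
  destruct Hin as [->|Hin].
  - pose proof (norm_le_rad_aux (vadd acc x) ys). pose proof (norm_le_rad_aux (vadd acc (vopp x)) ys). lra.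
  - pose proof (IH (vadd acc y) Hin) as H. pose proof (IH (vadd acc (vopp y)) Hin) as H0.
    rewrite !(vadd_rcomm acc y) in H. rewrite !(vadd_rcomm acc (vopp y)) in H0.
    assert (Hav : forall a : X, vnorm a <= (vnorm (vadd a y) + vnorm (vadd a (vopp y))) / 2).
    { intro a. pose proof (vnorm_triangle _ (vadd a y) (vadd a (vopp y))) as Ht.
      rewrite vadd_swap, vadd_opp, vadd_0r, vadd_double, vnorm_rscal, Rabs_right in Ht by lra. lra. }
    pose proof (Hav (vadd acc x)). pose proof (Hav (vadd acc (vopp x))). lra.
Qed.

Lemma Rnorm_ge_member xs x : In x xs -> vnorm x <= Rnorm xs.
Proof.
  intro H. pose proof (rad_aux_ge_member vzero xs x H) as H0.
  rewrite !vadd_0, vnorm_opp in H0. unfold Rnorm. lra.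
Qed.

(** Contraction principle for the multipliers 0 and 1. *)
Lemma rad_aux_drop acc (l : list (bool * X)) :
  rad_aux X acc (map (fun p : bool * X => if fst p then snd p else vzero) l) <= rad_aux X acc (map snd l).
Proof.
  revert acc; induction l as [|[b y] l IH]; intro acc; simpl; [lra|].
  destruct b.
  - pose proof (IH (vadd acc y)). pose proof (IH (vadd acc (vopp y))). lra.
  - rewrite vopp_zero, vadd_0r. pose proof (IH acc). pose proof (rad_aux_le_cons acc y (map snd l)). lra.
Qed.

Lemma rad_aux_add a b (l : list (X * X)) :
  rad_aux X (vadd a b) (map (fun p : X * X => vadd (fst p) (snd p)) l)
  <= rad_aux X a (map fst l) + rad_aux X b (map snd l).
Proof.
  revert a b; induction l as [|[x y] l IH]; intros a b; simpl; [apply vnorm_triangle|].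
  pose proof (IH (vadd a x) (vadd b y)) as H. pose proof (IH (vadd a (vopp x)) (vadd b (vopp y))) as H0.
  rewrite vadd_swap in H. rewrite vadd_swap, <- vopp_add in H0. lra.
Qed.

Lemma rad_aux_sub a b (l : list (X * X)) :
  rad_aux X (vsub a b) (map (fun p : X * X => vsub (fst p) (snd p)) l)
  <= rad_aux X a (map fst l) + rad_aux X b (map snd l).
Proof.
  revert a b; induction l as [|[x y] l IH]; intros a b; simpl; [apply vnorm_sub_le|].
  pose proof (IH (vadd a x) (vadd b y)). pose proof (IH (vadd a (vopp x)) (vadd b (vopp y))).
  assert (E1 : vadd (vsub a b) (vsub x y) = vsub (vadd a x) (vadd b y)) by (symmetry; apply vsub_add).
  assert (E2 : vadd (vsub a b) (vopp (vsub x y)) = vsub (vadd a (vopp x)) (vadd b (vopp y))).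
  { rewrite vopp_vsub. unfold vsub. rewrite vopp_add, vopp_opp, (vadd_swap a (vopp x)).
    f_equal. apply vadd_comm. }
  rewrite E1, E2. lra.
Qed.

Lemma Rnorm_add {A : Type} (f g : A -> X) (l : list A) :
  Rnorm (map (fun q => vadd (f q) (g q)) l) <= Rnorm (map f l) + Rnorm (map g l).
Proof.
  pose proof (rad_aux_add vzero vzero (map (fun q => (f q, g q)) l)) as H.
  rewrite vadd_0, !map_map in H. exact H.
Qed.

Lemma Rnorm_sub {A : Type} (f g : A -> X) (l : list A) :
  Rnorm (map (fun q => vsub (f q) (g q)) l) <= Rnorm (map f l) + Rnorm (map g l).
Proof.
  pose proof (rad_aux_sub vzero vzero (map (fun q => (f q, g q)) l)) as H.
  rewrite vsub_diag, !map_map in H. exact H.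
Qed.

Lemma Rnorm_map (T : X -> X) K xs : 0 <= K ->
  (forall x y, T (vadd x y) = vadd (T x) (T y)) -> (forall x, T (vopp x) = vopp (T x)) ->
  (forall x, vnorm (T x) <= K * vnorm x) ->
  Rnorm (map T xs) <= K * Rnorm xs.
Proof.
  intros HK Ha Ho Hb. unfold Rnorm.
  assert (H0 : T vzero = vzero).
  { apply vnorm_eq0. pose proof (Hb vzero). rewrite vnorm_zero in H.
    pose proof (vnorm_nonneg _ (T vzero)). lra. }
  rewrite <- H0 at 1. generalize (vzero : X) as acc.
  induction xs as [|x xs IH]; intro acc; simpl; [apply Hb|].
  pose proof (IH (vadd acc x)). pose proof (IH (vadd acc (vopp x))).
  rewrite Ha in H. rewrite Ha, Ho in H1. lra.
Qed.

Lemma Rnorm_psum {A : Type} (g : A -> nat -> X) (l : list A) m :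
  Rnorm (map (fun q => psum (g q) m) l) <= sum_f_R0 (fun n => Rnorm (map (fun q => g q n) l)) m.
Proof.
  induction m; simpl; [lra|].
  pose proof (Rnorm_add (fun q => psum (g q) m) (fun q => g q (S m)) l). lra.
Qed.

Definition norm_sum xs : R := fold_right (fun x s => vnorm x + s) 0 xs.

Lemma Rnorm_le_norm_sum xs : Rnorm xs <= norm_sum xs.
Proof.
  unfold Rnorm. enough (forall acc, rad_aux X acc xs <= vnorm acc + norm_sum xs) as H
    by (pose proof (H vzero); rewrite vnorm_zero in H0; lra).
  induction xs as [|x xs IH]; intro acc; simpl; [lra|].
  pose proof (IH (vadd acc x)). pose proof (IH (vadd acc (vopp x))).
  pose proof (vnorm_triangle _ acc x). pose proof (vnorm_triangle _ acc (vopp x)).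
  rewrite vnorm_opp in H2. lra.
Qed.

Lemma norm_sum_map_le {A : Type} (l : list A) (f : A -> X) (g : A -> X) C :
  0 <= C -> (forall q, In q l -> vnorm (f q) <= C * vnorm (g q)) ->
  norm_sum (map f l) <= INR (length l) * C * Rnorm (map g l).
Proof.
  intros HC H. induction l as [|q l IH]; [simpl; lra|].
  change (norm_sum (map f (q :: l))) with (vnorm (f q) + norm_sum (map f l)).
  change (map g (q :: l)) with (g q :: map g l). change (length (q :: l)) with (S (length l)).
  assert (Hy : vnorm (g q) <= Rnorm (g q :: map g l)) by (apply Rnorm_ge_member; simpl; auto).
  pose proof (Rnorm_le_cons (g q) (map g l)).
  pose proof (H q (or_introl eq_refl)).
  assert (norm_sum (map f l) <= INR (length l) * C * Rnorm (map g l)) by (apply IH; intros; apply H; simpl; auto).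
  rewrite S_INR. pose proof (pos_INR (length l)). pose proof (Rnorm_nonneg (map g l)).
  assert (INR (length l) * C * Rnorm (map g l) <= INR (length l) * C * Rnorm (g q :: map g l))
    by (apply Rmult_le_compat_l; auto; apply Rmult_le_pos; auto).
  nra.
Qed.

End Rademacher.

Section BlockFamilies.
Context {X : CBanach} {D : nat -> X -> Prop} (hD : schauder_decomposition D).
Context (beta : R) (hb0 : 0 <= beta) (hbeta : forall N x, vnorm (proj hD N x) <= beta * vnorm x).
Implicit Types (x : X) (qs : list (nat * X)).

Definition proj_pair (q : nat * X) : X := proj hD (fst q) (snd q).

Lemma not_R_schauder_witness K : ~ R_schauder D ->
  exists qs, Rnorm (map proj_pair qs) > K * Rnorm (map snd qs).
Proof.
  intro hnR. apply NNPP; intro Hn. apply hnR. exists K. intros ps Hps.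
  assert (exists qs, map proj_pair qs = map (fun p => fst p (snd p)) ps /\ map snd qs = map snd ps)
    as [qs [E1 E2]].
  { induction Hps as [|p ps [N HN] Hps IH]; [exists nil; auto|].
    destruct IH as [qs [E1 E2]].
    exists ((N, snd p) :: qs). simpl. rewrite E1, E2. split; auto. f_equal.
    unfold proj_pair; simpl. rewrite (HN (snd p) (coef hD (snd p))); auto. apply coef_expansion. }
  rewrite <- E1, <- E2. apply Rnot_lt_le. intro H. apply Hn. exists qs. lra.
Qed.

Definition block_proj (a b : nat) x : X := vsub (proj hD b x) (proj hD a x).

Lemma coef_block_proj a b x n : (a <= b)%nat ->
  coef hD (block_proj a b x) n = if andb (Nat.ltb a n) (Nat.leb n b) then coef hD x n else vzero.
Proof.
  intro Hab. unfold block_proj. rewrite coef_sub, !coef_proj.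
  destruct (Nat.leb_spec n b), (Nat.leb_spec n a), (Nat.ltb_spec a n); simpl; try lia;
    auto using vsub_diag, vsub_0r.
Qed.

Lemma Rnorm_block_proj_le a b (xs : list X) :
  Rnorm (map (block_proj a b) xs) <= 2 * beta * Rnorm xs.
Proof.
  apply Rnorm_map; [lra| | |].
  - intros. unfold block_proj. rewrite !proj_add. apply vsub_add.
  - intros. unfold block_proj. rewrite !proj_opp. unfold vsub. rewrite vopp_add; auto.
  - intros. eapply Rle_trans; [apply vnorm_sub_le|]. pose proof (hbeta b x). pose proof (hbeta a x). lra.
Qed.

Lemma proj_split_at N a b x : (N <= b)%nat ->
  proj hD N x = vadd (proj hD (Nat.min N a) x) (proj hD N (block_proj a b x)).
Proof.
  intro HNb. unfold block_proj. rewrite proj_sub, !proj_proj, (Nat.min_l N b HNb).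
  rewrite vadd_comm, vadd_vsub; auto.
Qed.

Lemma Rnorm_low_proj_le a qs :
  Rnorm (map (fun q => proj hD (Nat.min (fst q) a) (snd q)) qs) <= INR (S a) * (2 * beta) * Rnorm (map snd qs).
Proof.
  set (g := fun (q : nat * X) n => if Nat.leb n (fst q) then coef hD (snd q) n else vzero).
  replace (map (fun q => proj hD (Nat.min (fst q) a) (snd q)) qs) with (map (fun q => psum (g q) a) qs).
  2:{ apply map_ext. intro q. rewrite Nat.min_comm, <- proj_proj. unfold proj at 1.
      apply psum_ext. intros. unfold g. rewrite coef_proj; auto. }
  eapply Rle_trans; [apply Rnorm_psum|]. rewrite Rmult_assoc. apply sum_const_le. intro n.
  pose proof (rad_aux_drop vzero (map (fun q => (Nat.leb n (fst q), coef hD (snd q) n)) qs)) as H.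
  rewrite !map_map in H. simpl in H. unfold Rnorm. eapply Rle_trans; [apply H|].
  pose proof (Rnorm_map (fun x => coef hD x n) (2 * beta) (map snd qs) ltac:(lra)) as Hm.
  rewrite map_map in Hm. apply Hm.
  - intros; apply coef_add.
  - intros; apply coef_opp.
  - intros; apply (coef_norm_le hD beta hb0 hbeta).
Qed.

Fixpoint max_fst qs : nat := match qs with nil => O | q :: r => Nat.max (fst q) (max_fst r) end.

Lemma max_fst_ge q qs : In q qs -> (fst q <= max_fst qs)%nat.
Proof.
  induction qs; simpl; intros H; [contradiction|].
  destruct H as [->|H]; [lia|]. specialize (IHqs H); lia.
Qed.

Lemma block_witness a L : 0 <= L -> ~ R_schauder D ->
  exists b (ys : list (nat * X)), (a < b)%nat /\
    (forall y, In y ys -> forall n, (n <= a \/ b < n)%nat -> coef hD (snd y) n = vzero) /\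
    Rnorm (map proj_pair ys) > L * Rnorm (map snd ys).
Proof.
  intros HL hnR.
  destruct (not_R_schauder_witness (L * (2 * beta) + INR (S a) * (2 * beta)) hnR) as [qs Hqs].
  set (b := S (a + max_fst qs)).
  set (blk := fun q : nat * X => block_proj a b (snd q)).
  exists b, (map (fun q => (fst q, blk q)) qs).
  split; [unfold b; lia|]. split.
  { intros y Hy n Hn. apply in_map_iff in Hy as [q [<- Hq]]. simpl.
    unfold blk. rewrite coef_block_proj by (unfold b; lia).
    destruct (Nat.ltb_spec a n), (Nat.leb_spec n b); simpl; auto; lia. }
  rewrite !map_map. simpl. apply Rnot_le_lt. intro Hle.
  assert (Hsplit : Rnorm (map proj_pair qs)
     <= Rnorm (map (fun q => proj hD (Nat.min (fst q) a) (snd q)) qs) + Rnorm (map (fun q => proj hD (fst q) (blk q)) qs)).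
  { replace (map proj_pair qs) with (map (fun q => vadd (proj hD (Nat.min (fst q) a) (snd q)) (proj hD (fst q) (blk q))) qs)
      by (apply map_ext_in; intros q Hq; symmetry; apply proj_split_at;
          pose proof (max_fst_ge q qs Hq); unfold b; lia).
    apply Rnorm_add. }
  pose proof (Rnorm_low_proj_le a qs).
  pose proof (Rnorm_block_proj_le a b (map snd qs)) as Hblk. rewrite map_map in Hblk.
  pose proof (Rnorm_nonneg (map blk qs)).
  assert (L * Rnorm (map blk qs) <= L * (2 * beta * Rnorm (map snd qs))) by (apply Rmult_le_compat_l; auto).
  change (map (fun x : nat * X => proj_pair (fst x, blk x)) qs)
    with (map (fun q => proj hD (fst q) (blk q)) qs) in Hle.
  change (map (fun x : nat * X => blk x) qs) with (map blk qs) in Hle.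
  change (map (fun x : nat * X => block_proj a b (snd x)) qs) with (map blk qs) in Hblk.
  lra.
Qed.

End BlockFamilies.

Lemma exp_pow_nat x m : exp x ^ m = exp (INR m * x).
Proof.
  induction m; [simpl; rewrite Rmult_0_l, exp_0; auto|].
  rewrite S_INR. simpl pow. rewrite IHm, <- exp_plus. f_equal. ring.
Qed.

Lemma one_minus_exp_neg_bounds y : 0 <= y -> 0 <= 1 - exp (- y) <= y.
Proof.
  intro H. pose proof (exp_ineq1_le (- y)). split; [|lra].
  assert (exp (- y) <= 1); [|lra].
  rewrite <- exp_0. destruct H; [left; apply exp_increasing; lra|subst; rewrite Ropp_0; lra].
Qed.

Lemma exp_neg_antitone x y : x <= y -> exp (- y) <= exp (- x).
Proof.
  intro H. destruct (Req_dec x y) as [->|E]; [lra|]. left; apply exp_increasing; lra.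
Qed.

Lemma xexp_neg_le y : 0 <= y -> y * exp (- y) <= 2 * (1 - exp (- y)).
Proof.
  intro H. rewrite exp_Ropp. pose proof (exp_pos y). pose proof (exp_ineq1_le y).
  apply Rmult_le_reg_r with (exp y); auto. field_simplify; lra.
Qed.

Lemma xexp_neg_halving y : 0 <= y ->
  y * exp (- y) + 2 * (1 - exp (- (y / 2))) <= 2 * (1 - exp (- y)).
Proof.
  intro H. set (u := exp (- (y / 2))).
  assert (Hu : exp (- y) = u * u) by (unfold u; rewrite <- exp_plus; f_equal; field).
  rewrite Hu. assert (Hu0 : 0 < u) by apply exp_pos.
  assert (Hu1 : u * (1 + y / 2) <= 1).
  { unfold u. rewrite exp_Ropp. pose proof (exp_pos (y / 2)). pose proof (exp_ineq1_le (y / 2)).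
    apply Rmult_le_reg_r with (exp (y / 2)); auto. field_simplify; lra. }
  nra.
Qed.

Lemma sum_xexp_neg_le (x : nat -> R) M :
  (forall k, 0 <= x k) -> (forall k, x (S k) <= x k / 2) ->
  sum_f_R0 (fun k => x k * exp (- x k)) M <= 2 * (1 - exp (- x O)).
Proof.
  revert x; induction M; intros x H0 H1; [simpl; apply xexp_neg_le; auto|].
  rewrite decomp_sum by lia. simpl pred.
  pose proof (IHM (fun k => x (S k)) (fun k => H0 (S k)) (fun k => H1 (S k))). simpl in H.
  pose proof (exp_neg_antitone _ _ (H1 O)). pose proof (xexp_neg_halving (x O) (H0 O)). lra.
Qed.

Lemma exp_series x : Un_cv (sum_f_R0 (fun i => / INR (fact i) * x ^ i)) (exp x).
Proof. unfold exp. destruct (exist_exp x) as [l Hl]. simpl. exact Hl. Qed.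

Lemma exp_neg_INR_le (L : nat) : exp (- INR L) <= / (1 + INR L).
Proof.
  rewrite exp_Ropp. pose proof (pos_INR L). pose proof (exp_ineq1_le (INR L)).
  apply Rinv_le_contravar; lra.
Qed.

(** Weights growing by the factor [growth a] throughout the block [a < n <= block_end a],
    the blocks being [block_boundary j < n <= block_boundary (S j)]. *)
Section BlockWeights.
Context (block_end growth : nat -> nat).
Context (block_end_gt : forall a, (a < block_end a)%nat) (growth_ge : forall a, (2 <= growth a)%nat).

Fixpoint block_boundary (j : nat) : nat :=
  match j with O => O | S i => block_end (block_boundary i) end.

(** [block_state n] is the pair (start of the block containing [n], weight of [n]). *)
Fixpoint block_state (n : nat) : nat * nat :=
  match n with
  | O => (O, 1%nat)
  | S m =>
      let a := if Nat.leb (S m) (block_end (fst (block_state m))) then fst (block_state m) else m in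
      (a, (growth a * snd (block_state m))%nat)
  end.

Definition block_start n : nat := fst (block_state n).
Definition weight_nat n : nat := snd (block_state n).
Definition weight n : R := INR (weight_nat n).

Lemma weight_nat_S n : weight_nat (S n) = (growth (block_start (S n)) * weight_nat n)%nat.
Proof. reflexivity. Qed.

Lemma weight_nat_pos n : (1 <= weight_nat n)%nat.
Proof.
  induction n; [cbv; lia|]. rewrite weight_nat_S. pose proof (growth_ge (block_start (S n))). nia.
Qed.

Lemma weight_nat_double n : (2 * weight_nat n <= weight_nat (S n))%nat.
Proof. rewrite weight_nat_S. pose proof (growth_ge (block_start (S n))). nia. Qed.

Lemma weight_ge_1 n : 1 <= weight n.
Proof. unfold weight. pose proof (le_INR _ _ (weight_nat_pos n)). simpl in H. lra. Qed.

Lemma weight_double n : 2 * weight n <= weight (S n).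
Proof.
  unfold weight. pose proof (le_INR _ _ (weight_nat_double n)) as H.
  rewrite mult_INR in H. simpl in H. lra.
Qed.

Lemma weight_monotone n m : (n <= m)%nat -> weight n <= weight m.
Proof.
  induction 1; [lra|]. pose proof (weight_double m). pose proof (weight_ge_1 m). lra.
Qed.

Lemma block_boundary_lt i j : (i < j)%nat -> (block_boundary i < block_boundary j)%nat.
Proof.
  induction 1; simpl; pose proof (block_end_gt (block_boundary i));
    try pose proof (block_end_gt (block_boundary m)); lia.
Qed.

Lemma block_boundary_ge j : (j <= block_boundary j)%nat.
Proof. induction j; simpl; [lia|]. pose proof (block_end_gt (block_boundary j)). lia. Qed.

Lemma block_start_S m :
  block_start (S m) = if Nat.leb (S m) (block_end (block_start m)) then block_start m else m.
Proof. reflexivity. Qed.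

Lemma block_start_exists n : (1 <= n)%nat ->
  exists j, (block_boundary j < n <= block_boundary (S j))%nat /\ block_start n = block_boundary j.
Proof.
  induction n as [|n IH]; intro Hn; [lia|].
  destruct n.
  - exists O. pose proof (block_end_gt 0). rewrite block_start_S.
    destruct (Nat.leb_spec 1 (block_end (block_start 0))); simpl in *; [split; [lia|auto]|lia].
  - destruct (IH ltac:(lia)) as [j [[H1 H2] H3]].
    rewrite block_start_S, H3. simpl in H2.
    destruct (Nat.leb_spec (S (S n)) (block_end (block_boundary j))).
    + exists j. simpl. split; [lia|auto].
    + exists (S j). pose proof (block_end_gt (S n)). simpl.
      replace (block_end (block_boundary j)) with (S n) by lia. split; [lia|auto].
Qed.

Lemma block_start_eq j n :
  (block_boundary j < n <= block_boundary (S j))%nat -> block_start n = block_boundary j.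
Proof.
  intro H. destruct (block_start_exists n ltac:(lia)) as [j' [H' ->]]. f_equal.
  destruct (lt_eq_lt_dec j j') as [[Hl|Hl]|Hl]; auto.
  - pose proof (block_boundary_lt (S j) j'). destruct (Nat.eq_dec (S j) j'); subst; lia.
  - pose proof (block_boundary_lt (S j') j). destruct (Nat.eq_dec (S j') j); subst; lia.
Qed.

Lemma weight_in_block j m : (block_boundary j < S m <= block_boundary (S j))%nat ->
  weight (S m) = INR (growth (block_boundary j)) * weight m.
Proof. intro H. unfold weight. rewrite weight_nat_S, (block_start_eq j (S m) H), mult_INR; auto. Qed.

(** At time [L * weight N] the symbol [exp (- t / weight n)] is, on the block of [n], within
    [delta] of the indicator of [n > N]: below [N] the exponent is at least [L], above it at
    most [L / growth]. *)
Lemma exp_weight_symbol_near_indicator j n N L delta :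
  (block_boundary j < n <= block_boundary (S j))%nat -> 0 < delta ->
  exp (- INR L) <= delta -> INR L / delta <= INR (growth (block_boundary j)) ->
  Rabs ((1 - (if Nat.leb n N then 1 else 0))
        - exp (- INR (L * weight_nat (Nat.min N (block_boundary (S j)))) / weight n)) <= delta.
Proof.
  intros Hn Hd HL1 HL2.
  pose proof (weight_ge_1 n) as Hw1. pose proof (pos_INR L).
  rewrite mult_INR. fold (weight (Nat.min N (block_boundary (S j)))).
  set (wN := weight (Nat.min N (block_boundary (S j)))).
  destruct (Nat.leb_spec n N).
  - assert (Hle : weight n <= wN) by (apply weight_monotone; lia).
    assert (INR L <= INR L * wN / weight n).
    { apply Rmult_le_reg_r with (weight n); [lra|]. unfold Rdiv.
      rewrite Rmult_assoc, Rinv_l, Rmult_1_r by lra. apply Rmult_le_compat_l; auto. }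
    replace (- (INR L * wN) / weight n) with (- (INR L * wN / weight n)) by (field; lra).
    pose proof (exp_neg_antitone _ _ H1). pose proof (exp_pos (- (INR L * wN / weight n))).
    rewrite Rabs_left1 by lra. lra.
  - unfold wN. rewrite Nat.min_l by lia.
    destruct n as [|m]; [lia|].
    pose proof (weight_in_block j m Hn) as Hwm.
    assert (HG : 2 <= INR (growth (block_boundary j)))
      by (pose proof (le_INR _ _ (growth_ge (block_boundary j))); simpl in *; lra).
    assert (HNm : weight N <= weight m) by (apply weight_monotone; lia).
    pose proof (weight_ge_1 m). pose proof (weight_ge_1 N).
    set (y := INR L * weight N / weight (S m)).
    assert (Hy0 : 0 <= y) by (unfold y, Rdiv; apply Rmult_le_pos; [nra|left; apply Rinv_0_lt_compat; lra]).
    assert (Hyd : y <= delta).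
    { unfold y. rewrite Hwm.
      assert (INR L <= delta * INR (growth (block_boundary j))).
      { replace (INR L) with (INR L / delta * delta) by (field; lra). nra. }
      apply Rmult_le_reg_r with (INR (growth (block_boundary j)) * weight m); [nra|].
      unfold Rdiv. rewrite Rmult_assoc, Rinv_l, Rmult_1_r by nra. nra. }
    replace (- (INR L * weight N) / weight (S m)) with (- y) by (unfold y; field; lra).
    pose proof (one_minus_exp_neg_bounds y Hy0). rewrite Rabs_right; lra.
Qed.

End BlockWeights.

Section NotRBounded.
Context {X : CBanach} {D : nat -> X -> Prop} (hD : schauder_decomposition D).
Context (beta : R) (hb0 : 0 <= beta) (hbeta : forall N x, vnorm (proj hD N x) <= beta * vnorm x).
Implicit Types (ys : list (nat * X)).

Definition supported_in (a b : nat) (x : X) : Prop :=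
  forall n, (n <= a \/ b < n)%nat -> coef hD x n = vzero.

Definition tolerance (b : nat) ys : R :=
  / (INR (S b) * (2 * beta + 1) * (INR (length ys) + 1)).

Lemma tolerance_pos b ys : 0 < tolerance b ys.
Proof.
  unfold tolerance. apply Rinv_0_lt_compat. pose proof (pos_INR (length ys)).
  pose proof (lt_0_INR (S b) ltac:(lia)). apply Rmult_lt_0_compat; [apply Rmult_lt_0_compat|]; lra.
Qed.

Lemma tolerance_small b ys : INR (length ys) * (INR (S b) * tolerance b ys * (2 * beta)) <= 1.
Proof.
  unfold tolerance. pose proof (pos_INR (length ys)). pose proof (lt_0_INR (S b) ltac:(lia)).
  apply Rmult_le_reg_r with (INR (S b) * (2 * beta + 1) * (INR (length ys) + 1));
    [apply Rmult_lt_0_compat; [apply Rmult_lt_0_compat|]; lra|].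
  field_simplify; [|lra].
  assert (0 <= INR (length ys) * INR (S b)) by (apply Rmult_le_pos; lra).
  assert (0 <= INR (S b) * beta) by (apply Rmult_le_pos; lra). lra.
Qed.

(** One block [a < n <= b] of the construction: witnesses of ratio [a], and a time scale [L]
    and weight growth factor [G] adapted to their tolerance. *)
Definition good_block (a b G : nat) : Prop :=
  (a < b)%nat /\ (2 <= G)%nat /\ exists ys,
    (forall y, In y ys -> supported_in a b (snd y)) /\
    Rnorm (map (proj_pair hD) ys) > INR a * Rnorm (map snd ys) /\
    exists L : nat, exp (- INR L) <= tolerance b ys /\ INR L / tolerance b ys <= INR G.

Lemma good_block_exists a : ~ R_schauder D -> exists bG : nat * nat, good_block a (fst bG) (snd bG).
Proof.
  intro hnR.
  destruct (block_witness hD beta hb0 hbeta a (INR a) (pos_INR a) hnR) as [b [ys [Hab [Hsupp Hr]]]].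
  pose proof (tolerance_pos b ys) as Hd.
  destruct (INR_unbounded (/ tolerance b ys)) as [L HL].
  destruct (INR_unbounded (INR L / tolerance b ys + 2)) as [G HG].
  pose proof (pos_INR L).
  assert (0 <= INR L / tolerance b ys) by (unfold Rdiv; apply Rmult_le_pos; [lra|left; apply Rinv_0_lt_compat; lra]).
  exists (b, G). simpl. split; [auto|]. split.
  { destruct (le_lt_dec 2 G); auto. pose proof (le_INR G 1 ltac:(lia)). simpl in *. lra. }
  exists ys. split; [auto|]. split; [auto|]. exists L. split; [|lra].
  eapply Rle_trans; [apply exp_neg_INR_le|]. rewrite <- (Rinv_inv (tolerance b ys)).
  apply Rinv_le_contravar; [apply Rinv_0_lt_compat; auto|lra].
Qed.

Context (hnR : ~ R_schauder D).

Definition next_block (a : nat) : nat * nat :=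
  proj1_sig (constructive_indefinite_description _ (good_block_exists a hnR)).

Definition block_end a : nat := fst (next_block a).
Definition block_growth a : nat := snd (next_block a).

Lemma next_block_good a : good_block a (block_end a) (block_growth a).
Proof. unfold block_end, block_growth, next_block. destruct constructive_indefinite_description; auto. Qed.

Lemma block_end_gt a : (a < block_end a)%nat.
Proof. apply next_block_good. Qed.

Lemma block_growth_ge a : (2 <= block_growth a)%nat.
Proof. apply next_block_good. Qed.

Definition symbol_weight : nat -> R := weight block_end block_growth.

Definition exp_symbol_orbit (orbit : nat -> X -> X) : Prop :=
  forall m y b, (forall n, (b < n)%nat -> coef hD y n = vzero) ->
    orbit m y = psum (fun n => rscal (exp (- INR m / symbol_weight n)) (coef hD y n)) b.

Lemma proj_as_weighted_psum y b N : (forall n, (b < n)%nat -> coef hD y n = vzero) ->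
  proj hD N y = psum (fun n => rscal (if Nat.leb n N then 1 else 0) (coef hD y n)) b.
Proof.
  intro Hs.
  assert (Hind : forall k, rscal (if Nat.leb k N then 1 else 0) (coef hD y k)
                           = if Nat.leb k N then coef hD y k else vzero)
    by (intro k; destruct (Nat.leb k N); [apply rscal_1|apply rscal_0l]).
  unfold proj. destruct (Nat.le_gt_cases N b).
  - rewrite (psum_stationary _ N) with (n := b); auto.
    + apply psum_ext. intros k Hk. rewrite Hind. destruct (Nat.leb_spec k N); auto; lia.
    + intros k Hk. rewrite Hind. destruct (Nat.leb_spec k N); auto; lia.
  - rewrite (psum_stationary (coef hD y) b) with (n := N); [|intros; apply Hs; lia|lia].
    apply psum_ext. intros k Hk. rewrite Hind. destruct (Nat.leb_spec k N); auto; lia.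
Qed.

Lemma tail_error_norm_le (orbit : nat -> X -> X) j L y N delta :
  exp_symbol_orbit orbit ->
  0 < delta -> exp (- INR L) <= delta ->
  INR L / delta <= INR (block_growth (block_boundary block_end j)) ->
  supported_in (block_boundary block_end j) (block_boundary block_end (S j)) y ->
  vnorm (vsub (vsub y (proj hD N y))
              (orbit (L * weight_nat block_end block_growth (Nat.min N (block_boundary block_end (S j))))%nat y))
  <= INR (S (block_boundary block_end (S j))) * delta * (2 * beta) * vnorm y.
Proof.
  intros HS Hd HL1 HL2 Hsupp.
  set (a := block_boundary block_end j) in *. set (b := block_boundary block_end (S j)) in *.
  assert (Hb : forall n, (b < n)%nat -> coef hD y n = vzero) by (intros; apply Hsupp; lia).
  rewrite (HS _ y b Hb), (proj_as_weighted_psum y b N Hb).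
  rewrite <- (proj_of_finite hD y b Hb) at 1. unfold proj at 1.
  rewrite <- (psum_ext (fun n => rscal 1 (coef hD y n))) by (intros; apply rscal_1).
  rewrite <- !psum_sub. eapply Rle_trans; [apply psum_norm_le|].
  rewrite !Rmult_assoc. apply sum_const_le. intro n.
  rewrite <- !rscal_subl, vnorm_rscal.
  pose proof (vnorm_nonneg _ y).
  destruct (le_lt_dec n a) as [Hna|Hna]; [|destruct (le_lt_dec n b) as [Hnb|Hnb]].
  - rewrite Hsupp, vnorm_zero by lia. pose proof (Rmult_le_pos _ _ hb0 H). nra.
  - apply Rle_trans with (delta * (2 * beta * vnorm y)); [|right; ring].
    apply Rmult_le_compat; [apply Rabs_pos|apply vnorm_nonneg| |apply (coef_norm_le hD beta hb0 hbeta)].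
    apply exp_weight_symbol_near_indicator; auto; [apply block_end_gt|apply block_growth_ge].
  - rewrite Hb, vnorm_zero by lia. pose proof (Rmult_le_pos _ _ hb0 H). nra.
Qed.

(** On the [j]-th block the operators [orbit m], for the times [m] read off from the
    projections, approximate [I - P_N] up to an error summing to at most [Rnorm]; so
    R-boundedness with constant [K] would bound the ratio of the block's witnesses by [K + 2]. *)
Lemma not_R_bounded_of_exp_symbol_orbit (F : (X -> X) -> Prop) (orbit : nat -> X -> X) :
  (forall m, F (orbit m)) -> exp_symbol_orbit orbit -> ~ R_bounded F.
Proof.
  intros HF HS [K HK].
  destruct (INR_unbounded (K + 2)) as [j Hj].
  set (a := block_boundary block_end j). set (b := block_boundary block_end (S j)).
  destruct (next_block_good a) as [_ [_ [ys [Hsupp [Hratio [L [HL1 HL2]]]]]]].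
  fold b in Hsupp, Hratio, HL1, HL2.
  set (delta := tolerance b ys). pose proof (tolerance_pos b ys) as Hd. fold delta in Hd, HL1, HL2.
  set (time := fun N => (L * weight_nat block_end block_growth (Nat.min N b))%nat).
  set (G := fun y : nat * X => orbit (time (fst y)) (snd y)).
  set (err := fun y : nat * X => vsub (vsub (snd y) (G y)) (proj_pair hD y)).
  assert (HG : Rnorm (map G ys) <= K * Rnorm (map snd ys)).
  { pose proof (HK (map (fun y => (orbit (time (fst y)), snd y)) ys)) as H.
    rewrite !map_map in H. apply H.
    apply Forall_forall. intros p Hp. apply in_map_iff in Hp as [y [<- _]]. apply HF. }
  assert (Herr : norm_sum (map err ys) <= Rnorm (map snd ys)).
  { eapply Rle_trans; [apply (norm_sum_map_le ys err snd (INR (S b) * delta * (2 * beta)))|].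
    - pose proof (pos_INR (S b)). apply Rmult_le_pos; [apply Rmult_le_pos|]; lra.
    - intros y Hy. unfold err. rewrite vsub_rcomm. apply (tail_error_norm_le orbit j L); auto.
    - pose proof (tolerance_small b ys). pose proof (Rnorm_nonneg (map snd ys)). fold delta in H. nra. }
  assert (Hproj : Rnorm (map (proj_pair hD) ys)
                  <= Rnorm (map snd ys) + Rnorm (map G ys) + norm_sum (map err ys)).
  { replace (map (proj_pair hD) ys) with (map (fun y => vsub (vsub (snd y) (G y)) (err y)) ys)
      by (apply map_ext; intro y; unfold err; rewrite vsub_sub_r, vsub_diag, vadd_0; auto).
    pose proof (Rnorm_sub (fun y => vsub (snd y) (G y)) err ys).
    pose proof (Rnorm_sub snd G ys). pose proof (Rnorm_le_norm_sum (map err ys)). lra. }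
  pose proof (Rnorm_nonneg (map snd ys)).
  assert (INR j <= INR a) by (apply le_INR, block_boundary_ge, block_end_gt).
  assert ((K + 2) * Rnorm (map snd ys) <= INR a * Rnorm (map snd ys)) by (apply Rmult_le_compat_r; lra).
  lra.
Qed.

End NotRBounded.

Lemma bounded_variation_pow d k :
  (forall n, 0 <= d n <= 1) -> ((forall n, d n <= d (S n)) \/ (forall n, d (S n) <= d n)) ->
  bounded_variation (fun n => d n ^ k) 2.
Proof.
  intros H1 H2. apply bounded_variation_monotone.
  - intro n. pose proof (H1 n). split; [apply pow_le; lra|]. rewrite <- (pow1 k). apply pow_incr; lra.
  - destruct H2 as [H|H]; [left|right]; intro n; apply pow_incr;
      pose proof (H1 n); pose proof (H1 (S n)); specialize (H n); lra.
Qed.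

Section Operators.
Context {X : CBanach} {D : nat -> X -> Prop} (hD : schauder_decomposition D).
Context (beta : R) (hb0 : 0 <= beta) (hbeta : forall N x, vnorm (proj hD N x) <= beta * vnorm x).
Context (hnR : ~ R_schauder D).

Local Notation mult := (mult hD).
Local Notation w := (symbol_weight hD beta hb0 hbeta hnR).

Lemma mult_pow d k x :
  (forall n, 0 <= d n <= 1) -> ((forall n, d n <= d (S n)) \/ (forall n, d (S n) <= d n)) ->
  opow (mult d) k x = mult (fun n => d n ^ k) x.
Proof.
  intros H1 H2. induction k.
  - symmetry. apply (mult_eq hD beta hb0 hbeta _ 2); [apply (bounded_variation_pow d 0); auto|].
    eapply series_cv_ext; [|apply (coef_series hD x)]. intro; simpl; rewrite rscal_1; auto.
  - change (opow (mult d) (S k) x) with (mult d (opow (mult d) k x)). rewrite IHk.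
    rewrite (mult_comp hD beta hb0 hbeta d _ 2 2); [auto|apply bounded_variation_monotone|apply bounded_variation_pow]; auto.
Qed.

Lemma w_monotone n m : (n <= m)%nat -> w n <= w m.
Proof. apply weight_monotone, block_growth_ge. Qed.

Lemma w_ge_1 n : 1 <= w n.
Proof. apply weight_ge_1, block_growth_ge. Qed.

Definition inv_weight n : R := / w n.
Definition ritt_symbol n : R := exp (- inv_weight n).

Lemma inv_weight_bounds n : 0 < inv_weight n <= 1.
Proof.
  unfold inv_weight. pose proof (w_ge_1 n). split; [apply Rinv_0_lt_compat; lra|].
  rewrite <- Rinv_1. apply Rinv_le_contravar; lra.
Qed.

Lemma inv_weight_nonincreasing n : inv_weight (S n) <= inv_weight n.
Proof. unfold inv_weight. pose proof (w_ge_1 n). apply Rinv_le_contravar; [lra|apply w_monotone; lia]. Qed.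

Lemma ritt_symbol_bounds n : 0 < ritt_symbol n < 1.
Proof.
  unfold ritt_symbol. pose proof (inv_weight_bounds n). split; [apply exp_pos|].
  rewrite <- exp_0. apply exp_increasing. lra.
Qed.

Lemma ritt_symbol_nondecreasing n : ritt_symbol n <= ritt_symbol (S n).
Proof. apply exp_neg_antitone, inv_weight_nonincreasing. Qed.

Lemma inv_weight_variation : bounded_variation inv_weight 2.
Proof.
  apply bounded_variation_monotone; [intro n; pose proof (inv_weight_bounds n); lra|].
  right; apply inv_weight_nonincreasing.
Qed.

Lemma ritt_symbol_monotone :
  (forall n, 0 <= ritt_symbol n <= 1) /\ (forall n, ritt_symbol n <= ritt_symbol (S n)).
Proof. split; [intro n; pose proof (ritt_symbol_bounds n); lra|apply ritt_symbol_nondecreasing]. Qed.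

Lemma ritt_symbol_variation : bounded_variation ritt_symbol 2.
Proof. destruct ritt_symbol_monotone. apply bounded_variation_monotone; auto. Qed.

Lemma ritt_symbol_pow n m : ritt_symbol n ^ m = exp (- INR m / w n).
Proof. unfold ritt_symbol, inv_weight. rewrite exp_pow_nat. f_equal. pose proof (w_ge_1 n). field. lra. Qed.

Lemma ritt_orbit : exp_symbol_orbit hD beta hb0 hbeta hnR (opow (mult ritt_symbol)).
Proof.
  intros m y b Hy. destruct ritt_symbol_monotone as [H1 H2].
  rewrite mult_pow by auto.
  rewrite (mult_of_finite hD beta hb0 hbeta _ 2 y b); [|apply bounded_variation_pow|]; auto.
  apply psum_ext. intros; rewrite ritt_symbol_pow; auto.
Qed.

(** The symbol of [n T^n (I - T)], written as the combination [n c^n - n c^(n+1)]. *)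
Definition ritt_diff_symbol (n k : nat) : R :=
  INR n * ritt_symbol k ^ n + - INR n * (ritt_symbol k ^ n * ritt_symbol k).

Lemma ritt_diff_symbol_bounds n k :
  0 <= ritt_diff_symbol n k <= (INR n / w k) * exp (- (INR n / w k)).
Proof.
  unfold ritt_diff_symbol. pose proof (ritt_symbol_bounds k). pose proof (pos_INR n). pose proof (w_ge_1 k).
  replace (INR n * ritt_symbol k ^ n + - INR n * (ritt_symbol k ^ n * ritt_symbol k))
    with (INR n * ritt_symbol k ^ n * (1 - ritt_symbol k)) by ring.
  rewrite ritt_symbol_pow. pose proof (exp_pos (- INR n / w k)).
  replace (- (INR n / w k)) with (- INR n / w k) by (field; lra).
  pose proof (one_minus_exp_neg_bounds (inv_weight k) (Rlt_le _ _ (proj1 (inv_weight_bounds k)))).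
  fold (ritt_symbol k) in H3. unfold inv_weight in H3.
  split; [apply Rmult_le_pos; [apply Rmult_le_pos|]; lra|].
  replace (INR n / w k * exp (- INR n / w k)) with (INR n * exp (- INR n / w k) * / w k) by (field; lra).
  apply Rmult_le_compat_l; [apply Rmult_le_pos|]; lra.
Qed.

Lemma ritt_diff_symbol_sum_le n M : sum_f_R0 (ritt_diff_symbol n) M <= 2.
Proof.
  eapply Rle_trans; [apply sum_Rle; intros k _; apply (proj2 (ritt_diff_symbol_bounds n k))|].
  pose proof (pos_INR n).
  eapply Rle_trans; [apply (sum_xexp_neg_le (fun k => INR n / w k))|].
  - intro k. pose proof (w_ge_1 k). apply Rmult_le_pos; [lra|left; apply Rinv_0_lt_compat; lra].
  - intro k. pose proof (w_ge_1 k).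
    assert (Hw : 2 * w k <= w (S k)) by apply weight_double, block_growth_ge.
    unfold Rdiv. rewrite Rmult_assoc. apply Rmult_le_compat_l; auto.
    replace (/ w k * / 2) with (/ (2 * w k)) by (field; lra). apply Rinv_le_contravar; lra.
  - pose proof (exp_pos (- (INR n / w 0))). lra.
Qed.

Lemma ritt_diff_symbol_variation n : bounded_variation (ritt_diff_symbol n) 6.
Proof.
  intro M. assert (Hp : forall k, 0 <= ritt_diff_symbol n k) by (intro; apply ritt_diff_symbol_bounds).
  rewrite Rabs_right by (apply Rle_ge, Hp).
  pose proof (variation_nonneg_le_sum (ritt_diff_symbol n) M Hp).
  pose proof (sum_term_le (ritt_diff_symbol n) M M Hp (le_n _)).
  pose proof (ritt_diff_symbol_sum_le n M). lra.
Qed.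

Lemma ritt_symbol_mult_ritt : ritt (mult ritt_symbol).
Proof.
  destruct ritt_symbol_monotone as [H1 H2].
  assert (BVpow : forall n, bounded_variation (fun k => ritt_symbol k ^ n) 2)
    by (intro; apply bounded_variation_pow; auto).
  split.
  - exists (2 * beta). intros n x. rewrite mult_pow by auto. apply (mult_norm_le hD beta hb0 hbeta _ 2); auto.
  - exists (6 * beta). intros n x Hn.
    assert (BVnext : bounded_variation (fun k => ritt_symbol k ^ n * ritt_symbol k) (3 * 2 * 2))
      by (apply bounded_variation_mul; auto; apply ritt_symbol_variation).
    rewrite mult_pow by auto. fold (vsub x (mult ritt_symbol x)).
    rewrite (mult_sub hD beta hb0 hbeta _ 2), (mult_comp hD beta hb0 hbeta _ _ 2 2) by (auto using ritt_symbol_variation).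
    fold (rscal (INR n) (vsub (mult (fun k => ritt_symbol k ^ n) x) (mult (fun k => ritt_symbol k ^ n * ritt_symbol k) x))).
    replace (rscal (INR n) (vsub (mult (fun k => ritt_symbol k ^ n) x) (mult (fun k => ritt_symbol k ^ n * ritt_symbol k) x)))
      with (mult (ritt_diff_symbol n) x).
    + exact (mult_norm_le hD beta hb0 hbeta (ritt_diff_symbol n) 6 x (ritt_diff_symbol_variation n)).
    + unfold ritt_diff_symbol. rewrite (mult_lincomb hD beta hb0 hbeta _ _ _ _ 2 (3 * 2 * 2)) by auto.
      rewrite rscal_subr. unfold vsub. rewrite vopp_rscal. auto.
Qed.

Lemma mult_inv_weight_pow_norm_le k x :
  vnorm (opow (mult inv_weight) k x) <= (2 * beta) ^ k * vnorm x.
Proof.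
  induction k; simpl; [lra|].
  eapply Rle_trans; [apply (mult_norm_le hD beta hb0 hbeta _ 2 _ inv_weight_variation)|].
  apply Rle_trans with (2 * beta * ((2 * beta) ^ k * vnorm x)); [apply Rmult_le_compat_l; lra|right; ring].
Qed.

Definition exp_neg_term (t : R) (x : X) (k : nat) : X :=
  vscal (RtoC ((- t) ^ k / INR (fact k))) (opow (mult inv_weight) k x).

Lemma exp_neg_series_cv t x : exists l, series_cv (exp_neg_term t x) l.
Proof.
  apply (series_cv_of_dominated _ (fun k => / INR (fact k) * (Rabs t * (2 * beta)) ^ k * vnorm x)).
  - intro k. unfold exp_neg_term. fold (rscal ((- t) ^ k / INR (fact k)) (opow (mult inv_weight) k x)).
    rewrite vnorm_rscal, Rpow_mult_distr. unfold Rdiv.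
    rewrite Rabs_mult, Rabs_inv, <- RPow_abs, Rabs_Ropp, (Rabs_right (INR (fact k))) by (apply Rle_ge, pos_INR).
    pose proof (mult_inv_weight_pow_norm_le k x). pose proof (INR_fact_lt_0 k).
    assert (0 <= Rabs t ^ k * / INR (fact k))
      by (apply Rmult_le_pos; [apply pow_le, Rabs_pos|left; apply Rinv_0_lt_compat; auto]).
    replace (/ INR (fact k) * (Rabs t ^ k * (2 * beta) ^ k) * vnorm x)
      with (Rabs t ^ k * / INR (fact k) * ((2 * beta) ^ k * vnorm x)) by ring.
    apply Rmult_le_compat_l; auto.
  - apply CV_Cauchy. exists (exp (Rabs t * (2 * beta)) * vnorm x).
    apply (Un_cv_ext (fun n => sum_f_R0 (fun i => / INR (fact i) * (Rabs t * (2 * beta)) ^ i) n * vnorm x)).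
    + intro n. rewrite Rmult_comm, scal_sum. apply sum_eq. intros; ring.
    + apply CV_mult; [apply exp_series|intros eps He; exists O; intros; unfold R_dist; rewrite Rminus_diag, Rabs_R0; lra].
Qed.

Definition semigroup (t : R) (x : X) : X := series_value (exp_neg_term t x).

Lemma semigroup_is_exp_neg t : is_exp_neg t (mult inv_weight) (semigroup t).
Proof. intro x. destruct (exp_neg_series_cv t x) as [l Hl]. apply (series_value_spec _ l Hl). Qed.

Lemma semigroup_orbit : exp_symbol_orbit hD beta hb0 hbeta hnR (fun m => semigroup (INR m)).
Proof.
  intros m y b Hy. unfold semigroup.
  apply series_value_eq. unfold series_cv.
  assert (Hmono : (forall n, 0 <= inv_weight n <= 1) /\ (forall n, inv_weight (S n) <= inv_weight n))
    by (split; [intro n; pose proof (inv_weight_bounds n); lra|apply inv_weight_nonincreasing]).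
  destruct Hmono as [H1 H2].
  eapply seq_cv_ext.
  { intro M. symmetry.
    transitivity (psum (fun k => rscal ((- INR m) ^ k / INR (fact k))
                                   (psum (fun n => rscal (inv_weight n ^ k) (coef hD y n)) b)) M).
    - apply psum_ext. intros k _. unfold exp_neg_term, rscal at 1. f_equal.
      rewrite mult_pow by auto.
      apply (mult_of_finite hD beta hb0 hbeta _ 2); auto. apply bounded_variation_pow; auto.
    - apply psum_exchange. }
  apply seq_cv_psum_rscal. intro n.
  eapply Un_cv_ext; [|apply (exp_series (- INR m * inv_weight n))].
  intro M. apply sum_eq. intros k _. rewrite Rpow_mult_distr. unfold Rdiv, inv_weight. ring.
Qed.

Lemma inverse_sectorial_counterexample :
  exists a : nat -> R,
    (forall n, 0 < a n) /\ (forall n, a n <= a (S n)) /\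
    exists Ainv : X -> X,
      bounded_op Ainv /\ multiplier D (fun n => / a n) Ainv /\
      ~ R_bounded (fun S => exists t, 0 <= t /\ is_exp_neg t Ainv S).
Proof.
  exists w. split; [intro n; pose proof (w_ge_1 n); lra|]. split; [intro n; apply w_monotone; lia|].
  exists (mult inv_weight).
  split; [apply (mult_bounded_op hD beta hb0 hbeta _ 2), inv_weight_variation|].
  split; [apply (mult_multiplier hD beta hb0 hbeta _ 2), inv_weight_variation|].
  apply (not_R_bounded_of_exp_symbol_orbit hD beta hb0 hbeta hnR _ _
           (fun m => ex_intro _ (INR m) (conj (pos_INR m) (semigroup_is_exp_neg (INR m))))
           semigroup_orbit).
Qed.

Lemma ritt_counterexample :
  exists c : nat -> R,
    (forall n, 0 < c n < 1) /\ (forall n, c n <= c (S n)) /\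
    exists T : X -> X,
      bounded_op T /\ multiplier D c T /\ ritt T /\
      ~ R_bounded (fun S => exists n : nat, forall x, S x = opow T n x).
Proof.
  exists ritt_symbol. split; [apply ritt_symbol_bounds|]. split; [apply ritt_symbol_nondecreasing|].
  exists (mult ritt_symbol).
  split; [apply (mult_bounded_op hD beta hb0 hbeta _ 2), ritt_symbol_variation|].
  split; [apply (mult_multiplier hD beta hb0 hbeta _ 2), ritt_symbol_variation|].
  split; [apply ritt_symbol_mult_ritt|].
  apply (not_R_bounded_of_exp_symbol_orbit hD beta hb0 hbeta hnR _ _
           (fun m => ex_intro _ m (fun x => eq_refl)) ritt_orbit).
Qed.

End Operators.

Theorem theorem3 (X : CBanach) (D : nat -> X -> Prop)
  (hD : schauder_decomposition D) (hnR : ~ R_schauder D) :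
  (exists a : nat -> R,
     (forall n, 0 < a n) /\ (forall n, a n <= a (S n)) /\
     exists Ainv : X -> X,
       bounded_op Ainv /\ multiplier D (fun n => / a n) Ainv /\
       ~ R_bounded (fun S => exists t, 0 <= t /\ is_exp_neg t Ainv S)) /\
  (exists c : nat -> R,
     (forall n, 0 < c n < 1) /\ (forall n, c n <= c (S n)) /\
     exists T : X -> X,
       bounded_op T /\ multiplier D c T /\ ritt T /\
       ~ R_bounded (fun S => exists n : nat, forall x, S x = opow T n x)).
Proof.
  destruct (proj_uniformly_bounded hD) as [beta [hb0 hbeta]].
  split.
  - exact (inverse_sectorial_counterexample hD beta hb0 hbeta hnR).
  - exact (ritt_counterexample hD beta hb0 hbeta hnR).
Qed.
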